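(* The class of ordered strict outerconfluent graphs is a hereditary class of ordered graphs: every induced subgraph of an ordered strict outerconfluent graph is an ordered strict outerconfluent graph.
   Context: A strict outerconfluent drawing of a graph $G$ consists of finitely many smooth curves (tracks) in a topological disk, disjoint except at shared endpoints, which are vertices of $G$ (lying on the disk boundary, identified one-for-one with the vertices) or junctions (where at least three tracks meet with the same tangent). An edge curve is a smooth curve in the union of tracks from a vertex to a vertex passing otherwise only through tracks and junctions. Each pair of adjacent vertices must be joined by exactly one edge curve, no edge curve joins a vertex to itself or two non-adjacent vertices, and every track lies on some edge curve. An ordered strict outerconfluent drawing is such a drawing in a specified oriented disk, with all tracks and junctions interior to the disk except for their endpoints at vertices, plus a choice of starting vertex (the empty drawing is allowed, representing the empty graph). An ordered graph is a triple $(V,E,<)$ with $(V,E)$ a finite simple undirected graph and $<$ a total order on $V$; its induced subgraph on $S\subseteq V$ is $(S,E_S,<_S)$ with $E_S$ the edges inside $S$ and $<_S$ the restricted order. The ordered graph of an ordered strict outerconfluent drawing is the drawn graph with vertices ordered clockwise around the disk starting at the starting vertex; a strict outerconfluent ordered graph is any ordered graph arising this way. A class of ordered graphs is hereditary if it contains every induced subgraph of each of its members. *)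

From Stdlib Require Import Reals.
From mathcomp Require Import all_boot.

Set Implicit Arguments.
Unset Strict Implicit.
Unset Printing Implicit Defensive.

Local Open Scope R_scope.

(** Points of the plane; the fixed oriented disk is the closed unit disk. *)
Definition point := (R * R)%type.
Definition sqnorm (p : point) : R := fst p * fst p + snd p * snd p.

Definition has_C1_deriv (g d : R -> point) : Prop :=
  (forall t, derivable_pt_lim (fun s => fst (g s)) t (fst (d t))) /\
  (forall t, derivable_pt_lim (fun s => snd (g s)) t (snd (d t))) /\
  continuity (fun t => fst (d t)) /\ continuity (fun t => snd (d t)).

Definition smooth_with (g d : R -> point) : Prop :=
  has_C1_deriv g d /\ (forall t, 0 <= t <= 1 -> d t <> (0, 0)).

Definition img (g : R -> point) (p : point) : Prop :=
  exists t, 0 <= t <= 1 /\ g t = p.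

Definition injective_on (A : R -> Prop) (g : R -> point) : Prop :=
  forall s t, A s -> A t -> g s = g t -> s = t.

Definition is_endpoint (g : R -> point) (p : point) : Prop :=
  g 0 = p \/ g 1 = p.

Definition parallel (u v : point) : Prop :=
  fst u * snd v - snd u * fst v = 0.

Section Drawing.
Variables (V : finType) (m : nat).
(** a drawing: angular positions of vertices on the unit circle, measured
    clockwise from an angle [th0]; [m] tracks [tr] with derivatives [dtr]. *)
Variables (th0 : R) (th : V -> R) (tr dtr : 'I_m -> R -> point).

Definition vpos (v : V) : point := (cos (th0 - th v), sin (th0 - th v)).

Definition is_vertex_point (p : point) : Prop := exists w, vpos w = p.

Definition is_junction (p : point) : Prop :=
  sqnorm p < 1 /\
  (exists i1 i2 i3 : 'I_m, i1 <> i2 /\ i1 <> i3 /\ i2 <> i3 /\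
     is_endpoint (tr i1) p /\ is_endpoint (tr i2) p /\ is_endpoint (tr i3) p) /\
  (forall (i j : 'I_m) (a b : R), (a = 0 \/ a = 1) -> (b = 0 \/ b = 1) ->
     tr i a = p -> tr j b = p -> parallel (dtr i a) (dtr j b)).

Definition in_tracks (p : point) : Prop := exists i : 'I_m, img (tr i) p.

Definition tracks_ok : Prop :=
  (forall i, smooth_with (tr i) (dtr i)) /\
  (forall i, injective_on (fun t => 0 <= t <= 1) (tr i)) /\
  (forall i j : 'I_m, i <> j -> forall p, img (tr i) p -> img (tr j) p ->
      is_endpoint (tr i) p /\ is_endpoint (tr j) p) /\
  (forall i t, 0 < t < 1 -> sqnorm (tr i t) < 1) /\
  (forall i p, is_endpoint (tr i) p -> is_vertex_point p \/ is_junction p).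

(** edge curve from [u] to [v]: a smooth curve in the union of tracks,
    starting at [u], ending at [v], avoiding vertices in between.
    Curves are simple, except that the two endpoints may coincide. *)
Definition edge_curve (u v : V) (g : R -> point) : Prop :=
  (exists d, smooth_with g d) /\
  injective_on (fun t => 0 <= t < 1) g /\
  injective_on (fun t => 0 < t <= 1) g /\
  g 0 = vpos u /\ g 1 = vpos v /\
  (forall p, img g p -> in_tracks p) /\
  (forall t, 0 < t < 1 -> ~ is_vertex_point (g t)).

Definition edge_between (u v : V) (g : R -> point) : Prop :=
  edge_curve u v g \/ edge_curve v u g.

Definition same_image (g1 g2 : R -> point) : Prop :=
  forall p, img g1 p <-> img g2 p.

Definition draws (adj : rel V) : Prop :=
  tracks_ok /\
  (forall v, forall g, ~ edge_curve v v g) /\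
  (forall u v, u <> v -> adj u v ->
     (exists g, edge_curve u v g) /\
     (forall g1 g2, edge_between u v g1 -> edge_between u v g2 ->
        same_image g1 g2)) /\
  (forall u v, u <> v -> ~~ adj u v -> forall g, ~ edge_curve u v g) /\
  (forall i, exists u v g, edge_curve u v g /\
     forall p, img (tr i) p -> img g p).

End Drawing.

(** An ordered graph (V, adj, lt) is strict outerconfluent if it is the
    ordered graph of some ordered strict outerconfluent drawing: vertices sit
    on the unit circle at clockwise angles [th v] in [0, 2 pi) from the
    reference angle [th0] (the starting vertex being the one with the least
    angle), and [lt] is the clockwise order. *)
Definition strict_outerconfluent_ordered (V : finType) (adj lt : rel V) : Prop :=
  symmetric adj /\ irreflexive adj /\
  exists (m : nat) (th0 : R) (th : V -> R) (tr dtr : 'I_m -> R -> point),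
    (forall v, 0 <= th v < 2 * PI) /\
    injective th /\
    (forall x y, lt x y <-> th x < th y) /\
    draws th0 th tr dtr adj.

Definition induced_adj (V : finType) (S : {set V}) (adj : rel V)
  : rel {x : V | x \in S} := fun x y => adj (val x) (val y).
Definition induced_lt (V : finType) (S : {set V}) (lt : rel V)
  : rel {x : V | x \in S} := fun x y => lt (val x) (val y).
Arguments induced_adj {V} S adj.
Arguments induced_lt {V} S lt.

(** Restrict the drawing to the edge curves joining two vertices of [S]. Call a
    point a break point if it is a vertex of [S], or an interior point at which at
    least three tracks used by these curves end. Cutting the edge curves at break
    points gives arcs, and an arc meeting another one at an inner point must run
    along it up to the next break point; hence two arcs either have the same image
    or meet only at their ends. One arc per image, reparametrized over [0, 1], gives
    the tracks of the new drawing. Its junctions are the inner break points, where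
    the tangents of the arcs agree with those of the old tracks ending there, and
    its edge curves are exactly the old edge curves between vertices of [S]. *)

From Stdlib Require Import Reals Lra.
From Stdlib Require Import Classical ClassicalEpsilon FunctionalExtensionality.
From mathcomp Require Import all_boot.

Local Open Scope R_scope.

(** * Taxicab distance and continuity *)

Definition dist1 (p q : point) : R := Rabs (fst p - fst q) + Rabs (snd p - snd q).

Lemma dist1_ge0 p q : 0 <= dist1 p q.
Proof. unfold dist1; split_Rabs; lra. Qed.

Lemma dist1_sym p q : dist1 p q = dist1 q p.
Proof. unfold dist1; rewrite (Rabs_minus_sym (fst p)) (Rabs_minus_sym (snd p)); lra. Qed.

Lemma dist1_triangle p q r : dist1 p r <= dist1 p q + dist1 q r.
Proof. unfold dist1; split_Rabs; lra. Qed.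

Lemma dist1_gt0 p q : p <> q -> 0 < dist1 p q.
Proof.
destruct p as [a b], q as [c e]; unfold dist1; simpl; intro Hne.
destruct (Req_dec a c) as [<-|Hac]; [destruct (Req_dec b e) as [<-|Hbe]; [now elim Hne|]|].
- rewrite Rminus_diag Rabs_R0; apply Rplus_le_lt_0_compat; [lra|apply Rabs_pos_lt; lra].
- apply Rplus_lt_le_0_compat; [apply Rabs_pos_lt; lra|apply Rabs_pos].
Qed.

Definition eps_cont (f : R -> R) (t : R) : Prop :=
  forall e, 0 < e -> exists del, 0 < del /\
    forall t', Rabs (t' - t) < del -> Rabs (f t' - f t) < e.

Lemma eps_contP f t : eps_cont f t <-> continuity_pt f t.
Proof.
split; intros H e He; destruct (H e He) as [del [Hd K]]; exists del; split; auto.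
- intros t' [_ Ht']; exact (K t' Ht').
- intros t' Ht'; destruct (Req_dec t' t) as [->|Hne].
  + rewrite Rminus_diag Rabs_R0; exact He.
  + exact (K t' (conj (conj I (not_eq_sym Hne)) Ht')).
Qed.

Definition curve_cont (g : R -> point) (t : R) : Prop :=
  forall e, 0 < e -> exists del, 0 < del /\
    forall t', Rabs (t' - t) < del -> dist1 (g t') (g t) < e.

Lemma curve_cont_coords g t :
  eps_cont (fun s => fst (g s)) t -> eps_cont (fun s => snd (g s)) t -> curve_cont g t.
Proof.
intros H1 H2 e He.
destruct (H1 (e/2)) as [d1 [Hd1 K1]]; [lra|].
destruct (H2 (e/2)) as [d2 [Hd2 K2]]; [lra|].
exists (Rmin d1 d2); split; [apply Rmin_pos; auto|].
intros t' Ht'; unfold dist1.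
pose proof (K1 t' (Rlt_le_trans _ _ _ Ht' (Rmin_l _ _))).
pose proof (K2 t' (Rlt_le_trans _ _ _ Ht' (Rmin_r _ _))).
lra.
Qed.

Lemma derivable_pt_lim_eps_cont f t l : derivable_pt_lim f t l -> eps_cont f t.
Proof. intro H; apply eps_contP, derivable_continuous_pt; exists l; exact H. Qed.

Lemma C1_curve_cont g d : has_C1_deriv g d -> forall t, curve_cont g t.
Proof.
intros [H1 [H2 _]] t; apply curve_cont_coords; eapply derivable_pt_lim_eps_cont; eauto.
Qed.

Lemma curve_cont_dist1 g t q : curve_cont g t -> eps_cont (fun s => dist1 (g s) q) t.
Proof.
intros H e He; destruct (H e He) as [del [Hd K]]; exists del; split; auto.
intros t' Ht'; pose proof (K t' Ht') as Kt.
pose proof (dist1_triangle (g t') (g t) q) as T1.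
pose proof (dist1_triangle (g t) (g t') q) as T2.
rewrite (dist1_sym (g t) (g t')) in T2.
apply Rabs_def1; lra.
Qed.

Lemma curve_dist1_bounded_below g x y q : (forall t, curve_cont g t) ->
  (forall t, x <= t <= y -> g t <> q) ->
  exists eta, 0 < eta /\ forall t, x <= t <= y -> eta <= dist1 (g t) q.
Proof.
intros Hg Hne; destruct (Rle_dec x y) as [Hxy|Hxy]; [|exists 1; split; [lra|]; intros t Ht; lra].
destruct (continuity_ab_min (fun s => dist1 (g s) q) x y Hxy) as [t0 [Hmin Ht0]].
{ intros c _; apply eps_contP, curve_cont_dist1, Hg. }
exists (dist1 (g t0) q); split; auto.
apply dist1_gt0, Hne, Ht0.
Qed.

Lemma injective_curve_inverse_cont c : (forall t, curve_cont c t) ->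
  injective_on (fun t => 0 <= t <= 1) c ->
  forall s0, 0 <= s0 <= 1 -> forall del, 0 < del ->
  exists eta, 0 < eta /\
    forall s, 0 <= s <= 1 -> dist1 (c s) (c s0) < eta -> Rabs (s - s0) < del.
Proof.
intros Hc Hi s0 Hs0 del Hd.
destruct (curve_dist1_bounded_below c 0 (s0 - del) (c s0) Hc) as [e1 [He1 K1]].
{ intros t Ht E; apply Hi in E; lra. }
destruct (curve_dist1_bounded_below c (s0 + del) 1 (c s0) Hc) as [e2 [He2 K2]].
{ intros t Ht E; apply Hi in E; lra. }
exists (Rmin e1 e2); split; [apply Rmin_pos; auto|].
intros s Hs Hlt; pose proof (Rmin_l e1 e2); pose proof (Rmin_r e1 e2).
destruct (Rle_dec s (s0 - del)) as [L|L]; [pose proof (K1 s ltac:(lra)); lra|].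
destruct (Rle_dec (s0 + del) s) as [L'|L']; [pose proof (K2 s ltac:(lra)); lra|].
apply Rabs_def1; lra.
Qed.

Lemma injective_curve_isolated g c tau : injective_on (fun t => 0 <= t <= 1) g ->
  exists e, 0 < e /\ forall t, 0 <= t <= 1 -> 0 < Rabs (t - tau) < e -> g t <> c.
Proof.
intro Hi.
destruct (classic (exists t1, 0 <= t1 <= 1 /\ t1 <> tau /\ g t1 = c)) as [[t1 [H1 [H2 H3]]]|N].
- exists (Rabs (t1 - tau)); split; [apply Rabs_pos_lt; lra|].
  intros t Ht [_ Hlt] E; rewrite <- H3 in E; apply Hi in E; auto; subst; lra.
- exists 1; split; [lra|]; intros t Ht [Hp _] E.
  apply N; exists t; split; [exact Ht|split; [|exact E]].
  intro E0; rewrite E0 Rminus_diag Rabs_R0 in Hp; lra.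
Qed.

(** * Suprema and intermediate values *)

Lemma lub_approx (E : R -> Prop) z del : is_lub E z -> 0 < del ->
  exists t, E t /\ z - del < t.
Proof.
intros [_ Hl] Hd; apply NNPP; intro N.
assert (Hb : is_upper_bound E (z - del)).
{ intros t Et; apply Rnot_lt_le; intro L; apply N; exists t; auto. }
pose proof (Hl _ Hb); lra.
Qed.

Definition cont_on (f : R -> R) (x y : R) : Prop :=
  forall t, x <= t <= y -> forall e, 0 < e -> exists del, 0 < del /\
    forall t', x <= t' <= y -> Rabs (t' - t) < del -> Rabs (f t' - f t) < e.

Definition clamp (x y t : R) : R := Rmax x (Rmin y t).

Lemma clamp_in x y t : x <= y -> x <= clamp x y t <= y.
Proof. unfold clamp, Rmax, Rmin; intro; repeat destruct Rle_dec; lra. Qed.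

Lemma clamp_id x y t : x <= t <= y -> clamp x y t = t.
Proof. unfold clamp, Rmax, Rmin; intro; repeat destruct Rle_dec; lra. Qed.

Lemma clamp_1lipschitz x y s t : Rabs (clamp x y s - clamp x y t) <= Rabs (s - t).
Proof. unfold clamp, Rmax, Rmin; repeat destruct Rle_dec; split_Rabs; lra. Qed.

(* [f] extended by constants outside [x, y] is continuous, so [IVT_cor] applies *)
Lemma IVT_on f x y c : x <= y -> cont_on f x y -> (f x - c) * (f y - c) <= 0 ->
  exists z, x <= z <= y /\ f z = c.
Proof.
intros Hxy Hf Hc.
set (F := fun t => f (clamp x y t) - c).
assert (HF : continuity F).
{ intro t; apply eps_contP; intros e He.
  destruct (Hf (clamp x y t) (clamp_in x y t Hxy) e He) as [del [Hd K]].
  exists del; split; auto; intros t' Ht'; unfold F.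
  replace (f (clamp x y t') - c - (f (clamp x y t) - c))
    with (f (clamp x y t') - f (clamp x y t)) by ring.
  apply K; [apply clamp_in; auto|].
  exact (Rle_lt_trans _ _ _ (clamp_1lipschitz x y t' t) Ht'). }
destruct (IVT_cor F x y HF Hxy) as [z [Hz Ez]].
{ unfold F; rewrite !clamp_id; lra. }
exists z; split; auto; unfold F in Ez; rewrite clamp_id in Ez; lra.
Qed.

Lemma last_point (P : R -> Prop) x y : x <= y -> P x ->
  (forall t, x <= t <= y -> exists e, 0 < e /\
     forall t', x <= t' <= y -> 0 < Rabs (t' - t) < e -> ~ P t') ->
  exists a, x <= a <= y /\ P a /\ forall t, a < t <= y -> ~ P t.
Proof.
intros Hxy Px Iso.
set (E := fun t => x <= t <= y /\ P t).
destruct (completeness E) as [a Ha].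
{ exists y; intros t [Ht _]; lra. }
{ exists x; split; [lra|auto]. }
assert (Hxa : x <= a) by (apply (proj1 Ha); split; [lra|auto]).
assert (Hay : a <= y) by (apply (proj2 Ha); intros t [Ht _]; lra).
exists a; split; [lra|]; split.
- destruct (Iso a (conj Hxa Hay)) as [e [He K]].
  destruct (lub_approx _ _ _ Ha He) as [t [[Ht Pt] Hlt]].
  assert (t <= a) by (apply (proj1 Ha); split; auto).
  destruct (Req_dec t a) as [<-|Ne]; auto.
  exfalso; apply (K t Ht); auto; split; [apply Rabs_pos_lt; lra|rewrite Rabs_left1; lra].
- intros t Ht Pt; assert (t <= a) by (apply (proj1 Ha); split; [lra|auto]); lra.
Qed.

Lemma first_point (P : R -> Prop) x y : x <= y -> P y ->
  (forall t, x <= t <= y -> exists e, 0 < e /\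
     forall t', x <= t' <= y -> 0 < Rabs (t' - t) < e -> ~ P t') ->
  exists b, x <= b <= y /\ P b /\ forall t, x <= t < b -> ~ P t.
Proof.
intros Hxy Py Iso.
destruct (last_point (fun t => P (- t)) (- y) (- x)) as [a [Ha [Pa K]]].
- lra.
- rewrite Ropp_involutive; auto.
- intros t Ht; destruct (Iso (- t) ltac:(lra)) as [e [He K]]; exists e; split; auto.
  intros t' Ht' Hr; apply K; [lra|].
  replace (- t' - - t) with (- (t' - t)) by ring; rewrite Rabs_Ropp; auto.
- exists (- a); split; [lra|]; split; auto.
  intros t Ht Pt; apply (K (- t)); [lra|]; rewrite Ropp_involutive; auto.
Qed.

Lemma finite_uniform_pos (I : finType) (P : I -> R -> Prop) :
  (forall i e e', 0 < e' <= e -> P i e -> P i e') ->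
  (forall i, exists e, 0 < e /\ P i e) -> exists e, 0 < e /\ forall i, P i e.
Proof.
intros Hmon Hex.
assert (L : forall l : seq I, exists e, 0 < e /\ forall i, i \in l -> P i e).
{ elim=> [|a l [e [He K]]].
  - by exists 1; split; [lra|]; intros i; rewrite in_nil.
  - destruct (Hex a) as [ea [Hea Ka]].
    exists (Rmin e ea); split; [apply Rmin_pos; auto|].
    pose proof (Rmin_pos _ _ He Hea); pose proof (Rmin_l e ea); pose proof (Rmin_r e ea).
    intros i; rewrite in_cons; case/orP => [/eqP ->|Hi].
    + apply (Hmon a ea); auto; lra.
    + apply (Hmon i e); auto; lra. }
destruct (L (enum I)) as [e [He K]]; exists e; split; auto.
by intro i; apply K; rewrite mem_enum.
Qed.

Lemma curve_onto_injective_curve g c a b :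
  (forall t, curve_cont g t) -> (forall t, curve_cont c t) ->
  injective_on (fun t => 0 <= t <= 1) c -> a <= b ->
  (forall t, a <= t <= b -> img c (g t)) ->
  (g a = c 0 /\ g b = c 1) \/ (g a = c 1 /\ g b = c 0) ->
  forall s, 0 <= s <= 1 -> exists t, a <= t <= b /\ g t = c s.
Proof.
intros Hg Hc Hi Hab Himg Hends s Hs.
set (phi := fun t => epsilon (inhabits 0) (fun r => 0 <= r <= 1 /\ c r = g t)).
assert (Hphi : forall t, a <= t <= b -> 0 <= phi t <= 1 /\ c (phi t) = g t).
{ intros t Ht; exact (epsilon_spec (inhabits 0) _ (Himg t Ht)). }
assert (Hcont : cont_on phi a b).
{ intros t Ht e He; destruct (Hphi t Ht) as [Pt Et].
  destruct (injective_curve_inverse_cont c Hc Hi (phi t) Pt e He) as [eta [Heta K]].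
  destruct (Hg t eta Heta) as [d [Hd Kd]].
  exists d; split; auto; intros t' Ht' Hdt; destruct (Hphi t' Ht') as [Pt' Et'].
  apply K; auto; rewrite Et Et'; apply Kd; auto. }
assert (Hphi_ends : (phi a = 0 /\ phi b = 1) \/ (phi a = 1 /\ phi b = 0)).
{ destruct (Hphi a ltac:(lra)) as [Pa Ea]; destruct (Hphi b ltac:(lra)) as [Pb Eb].
  destruct Hends as [[E1 E2]|[E1 E2]]; [left|right]; rewrite <- Ea in E1; rewrite <- Eb in E2;
    split; apply Hi; auto; lra. }
destruct (IVT_on phi a b s Hab Hcont) as [z [Hz Ez]]; [nra|].
exists z; split; auto; rewrite <- Ez; symmetry; apply Hphi, Hz.
Qed.

(** * Tangents of curves meeting a curve *)

Definition scale (k : R) (p : point) : point := (k * fst p, k * snd p).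

Lemma parallel_sym u v : parallel u v -> parallel v u.
Proof. unfold parallel; lra. Qed.

Lemma parallel_trans u w v : w <> (0, 0) -> parallel u w -> parallel w v -> parallel u v.
Proof.
unfold parallel; destruct u as [u1 u2], w as [w1 w2], v as [v1 v2]; simpl; intros Hw H1 H2.
assert (A1 : w1 * (u1 * v2 - u2 * v1) = 0).
{ transitivity (u1 * (w1 * v2 - w2 * v1) + v1 * (u1 * w2 - u2 * w1)); [ring|rewrite H1 H2; ring]. }
assert (A2 : w2 * (u1 * v2 - u2 * v1) = 0).
{ transitivity (u2 * (w1 * v2 - w2 * v1) + v2 * (u1 * w2 - u2 * w1)); [ring|rewrite H1 H2; ring]. }
destruct (Req_dec w1 0) as [->|Z1]; [destruct (Req_dec w2 0) as [->|Z2]; [now elim Hw|]|].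
- apply Rmult_integral in A2; destruct A2; [contradiction|auto].
- apply Rmult_integral in A1; destruct A1; [contradiction|auto].
Qed.

Lemma parallel_scale_l k u v : parallel u v -> parallel (scale k u) v.
Proof.
unfold parallel, scale; simpl; intro H.
transitivity (k * (fst u * snd v - snd u * fst v)); [ring|rewrite H; ring].
Qed.

Lemma dist1_origin u : dist1 u (0, 0) = Rabs (fst u) + Rabs (snd u).
Proof. by unfold dist1; rewrite !Rminus_0_r. Qed.

Lemma cross_bound x1 x2 w1 w2 :
  Rabs (x1 * w2 - x2 * w1) <= (Rabs x1 + Rabs x2) * (Rabs w1 + Rabs w2).
Proof.
eapply Rle_trans; [apply Rabs_triang|]; rewrite Rabs_Ropp !Rabs_mult.
pose proof (Rabs_pos x1); pose proof (Rabs_pos x2).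
pose proof (Rabs_pos w1); pose proof (Rabs_pos w2).
nra.
Qed.

Lemma derivable_pt_lim_approx f x l : derivable_pt_lim f x l -> forall eps, 0 < eps ->
  exists del, 0 < del /\ forall y, Rabs (y - x) < del ->
    Rabs (f y - f x - (y - x) * l) <= eps * Rabs (y - x).
Proof.
intros H eps He; destruct (H eps He) as [[del Hd] K]; exists del; split; auto.
intros y Hy; destruct (Req_dec y x) as [->|Ne].
- rewrite !Rminus_diag Rabs_R0; replace (0 - 0 * l) with 0 by ring; rewrite Rabs_R0; lra.
- assert (Hh : y - x <> 0) by lra.
  pose proof (K (y - x) Hh Hy) as Q; simpl in Q.
  replace (x + (y - x)) with y in Q by ring.
  replace ((f y - f x) / (y - x) - l) with ((f y - f x - (y - x) * l) / (y - x)) in Q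
    by (field; auto).
  unfold Rdiv in Q; rewrite Rabs_mult Rabs_inv in Q.
  pose proof (Rabs_pos_lt _ Hh) as P.
  apply Rmult_lt_compat_r with (r := Rabs (y - x)) in Q; auto.
  rewrite Rmult_assoc Rinv_l in Q; lra.
Qed.

Lemma curve_deriv_approx g x d :
  derivable_pt_lim (fun s => fst (g s)) x (fst d) ->
  derivable_pt_lim (fun s => snd (g s)) x (snd d) ->
  forall eps, 0 < eps -> exists del, 0 < del /\ forall y, Rabs (y - x) < del ->
    Rabs (fst (g y) - fst (g x) - (y - x) * fst d)
      + Rabs (snd (g y) - snd (g x) - (y - x) * snd d) <= eps * Rabs (y - x).
Proof.
intros H1 H2 eps He.
destruct (derivable_pt_lim_approx _ _ _ H1 (eps / 2)) as [d1 [Hd1 K1]]; [lra|].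
destruct (derivable_pt_lim_approx _ _ _ H2 (eps / 2)) as [d2 [Hd2 K2]]; [lra|].
exists (Rmin d1 d2); split; [apply Rmin_pos; auto|]; intros y Hy.
pose proof (K1 y (Rlt_le_trans _ _ _ Hy (Rmin_l _ _))).
pose proof (K2 y (Rlt_le_trans _ _ _ Hy (Rmin_r _ _))).
lra.
Qed.

(* A common secant [D = h f + O(e1 h) = k w + O(e2 k)] of two curves forces their
   tangents [f] and [w] to be almost parallel. *)
Lemma secant_cross_estimate f1 f2 w1 w2 D1 D2 h k e1 e2 : h <> 0 -> 0 <= e2 ->
  4 * e2 <= Rabs w1 + Rabs w2 ->
  Rabs (D1 - h * f1) + Rabs (D2 - h * f2) <= e1 * Rabs h ->
  Rabs (D1 - k * w1) + Rabs (D2 - k * w2) <= e2 * Rabs k ->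
  Rabs (f1 * w2 - f2 * w1) <= 2 * e2 * (Rabs f1 + Rabs f2 + e1) + e1 * (Rabs w1 + Rabs w2).
Proof.
intros Hh He2 Hsmall Hf Hw.
set (N := Rabs w1 + Rabs w2) in *.
pose proof (Rabs_pos_lt h Hh) as Hhp.
assert (Hk : Rabs k * N <= 2 * (Rabs D1 + Rabs D2)).
{ assert (T1 : Rabs (k * w1) <= Rabs D1 + Rabs (D1 - k * w1)) by (split_Rabs; lra).
  assert (T2 : Rabs (k * w2) <= Rabs D2 + Rabs (D2 - k * w2)) by (split_Rabs; lra).
  rewrite !Rabs_mult in T1 T2; pose proof (Rabs_pos k); unfold N in *; nra. }
assert (HD : Rabs D1 + Rabs D2 <= Rabs h * (Rabs f1 + Rabs f2 + e1)).
{ assert (T1 : Rabs D1 <= Rabs (h * f1) + Rabs (D1 - h * f1)) by (split_Rabs; lra).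
  assert (T2 : Rabs D2 <= Rabs (h * f2) + Rabs (D2 - h * f2)) by (split_Rabs; lra).
  rewrite !Rabs_mult in T1 T2; nra. }
assert (Hsec : Rabs (D1 * w2 - D2 * w1) <= 2 * e2 * Rabs h * (Rabs f1 + Rabs f2 + e1)).
{ replace (D1 * w2 - D2 * w1) with ((D1 - k * w1) * w2 - (D2 - k * w2) * w1) by ring.
  eapply Rle_trans; [apply cross_bound|]; fold N.
  pose proof (Rabs_pos k); pose proof (Rabs_pos w1); pose proof (Rabs_pos w2); unfold N in *; nra. }
assert (Htan : Rabs h * Rabs (f1 * w2 - f2 * w1)
               <= Rabs (D1 * w2 - D2 * w1) + e1 * Rabs h * N).
{ rewrite <- Rabs_mult.
  replace (h * (f1 * w2 - f2 * w1))
    with ((D1 * w2 - D2 * w1) - ((D1 - h * f1) * w2 - (D2 - h * f2) * w1)) by ring.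
  pose proof (cross_bound (D1 - h * f1) (D2 - h * f2) w1 w2) as CB; fold N in CB.
  assert (0 <= N) by (unfold N; pose proof (Rabs_pos w1); pose proof (Rabs_pos w2); lra).
  eapply Rle_trans; [apply Rabs_triang|]; rewrite Rabs_Ropp; nra. }
apply (Rmult_le_reg_l (Rabs h)); [exact Hhp|]; nra.
Qed.

Lemma secant_tolerances K N F : 0 < K -> 0 < N -> 0 <= F ->
  exists e1 e2, 0 < e1 /\ 0 < e2 /\ 4 * e2 <= N /\ 2 * e2 * (F + e1) + e1 * N < K.
Proof.
intros HK HN HF.
pose proof (Rmin_l 1 (K / (4 * N))) as E1l; pose proof (Rmin_r 1 (K / (4 * N))) as E1r.
pose proof (Rmin_l (N / 4) (K / (8 * (F + 1)))) as E2l.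
pose proof (Rmin_r (N / 4) (K / (8 * (F + 1)))) as E2r.
set (e1 := Rmin 1 (K / (4 * N))) in *; set (e2 := Rmin (N / 4) (K / (8 * (F + 1)))) in *.
assert (He1 : 0 < e1) by (apply Rmin_pos; [lra|apply Rdiv_lt_0_compat; lra]).
assert (He2 : 0 < e2) by (apply Rmin_pos; apply Rdiv_lt_0_compat; lra).
exists e1, e2; do 3 (split; [lra|]).
apply (Rmult_le_compat_r N) in E1r; [|lra].
replace (K / (4 * N) * N) with (K / 4) in E1r by (field; lra).
apply (Rmult_le_compat_r (F + 1)) in E2r; [|lra].
replace (K / (8 * (F + 1)) * (F + 1)) with (K / 8) in E2r by (field; lra).
assert (e2 * e1 <= e2 * 1) by (apply Rmult_le_compat_l; lra).
lra.
Qed.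

Lemma tangent_parallel f fd a c w e :
  derivable_pt_lim (fun s => fst (f s)) a (fst fd) ->
  derivable_pt_lim (fun s => snd (f s)) a (snd fd) ->
  derivable_pt_lim (fun s => fst (c s)) e (fst w) ->
  derivable_pt_lim (fun s => snd (c s)) e (snd w) ->
  (forall t, curve_cont c t) -> injective_on (fun t => 0 <= t <= 1) c -> 0 <= e <= 1 ->
  w <> (0, 0) -> f a = c e ->
  (forall del, 0 < del -> exists t, 0 < Rabs (t - a) < del /\
     exists r, 0 <= r <= 1 /\ f t = c r) ->
  parallel fd w.
Proof.
intros Hf1 Hf2 Hc1 Hc2 Hcc Hci He Hw Hfa Hnear.
apply NNPP; intro HK; unfold parallel in HK.
destruct (secant_tolerances (Rabs (fst fd * snd w - snd fd * fst w))
  (Rabs (fst w) + Rabs (snd w)) (Rabs (fst fd) + Rabs (snd fd)))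
  as [e1 [e2 [He1 [He2 [e2N Hsmall]]]]].
- by apply Rabs_pos_lt.
- rewrite -dist1_origin; exact (dist1_gt0 w (0, 0) Hw).
- rewrite -dist1_origin; apply dist1_ge0.
destruct (curve_deriv_approx f a fd Hf1 Hf2 e1 He1) as [d1 [Hd1 B1]].
destruct (curve_deriv_approx c e w Hc1 Hc2 e2 He2) as [d2 [Hd2 B2]].
destruct (injective_curve_inverse_cont c Hcc Hci e He d2 Hd2) as [eta [Heta Ki]].
destruct (curve_cont_coords f a) with (e := eta) as [d3 [Hd3 K3]]; auto;
  try (eapply derivable_pt_lim_eps_cont; eauto).
destruct (Hnear (Rmin d1 d3) (Rmin_pos _ _ Hd1 Hd3)) as [t [Ht [r [Hr Ef]]]].
pose proof (Rmin_l d1 d3); pose proof (Rmin_r d1 d3).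
pose proof (K3 t ltac:(lra)) as Q3; rewrite Ef Hfa in Q3.
pose proof (B2 r (Ki r Hr Q3)) as Q2; rewrite <- Ef, <- Hfa in Q2.
pose proof (B1 t ltac:(lra)) as Q1.
assert (Hh : t - a <> 0) by (intro E0; rewrite E0 Rabs_R0 in Ht; lra).
pose proof (secant_cross_estimate _ _ _ _ _ _ (t - a) (r - e) e1 e2 Hh (Rlt_le _ _ He2) e2N Q1 Q2).
lra.
Qed.

(** * Affine reparametrization *)

Lemma affine_between a b s : a <= b -> 0 <= s <= 1 -> a <= a + (b - a) * s <= b.
Proof. intros; nra. Qed.

Lemma affine_between_strict a b s : a < b -> 0 < s < 1 -> a < a + (b - a) * s < b.
Proof. intros; nra. Qed.

Lemma derivable_pt_lim_affine a c t : derivable_pt_lim (fun s => a + c * s) t c.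
Proof.
intros eps He; exists (mkposreal 1 Rlt_0_1); intros h Hh _.
replace ((a + c * (t + h) - (a + c * t)) / h - c) with 0 by (field; auto).
rewrite Rabs_R0; exact He.
Qed.

Lemma continuity_pt_affine_comp (f : R -> R) a c t :
  continuity_pt f (a + c * t) -> continuity_pt (fun s => c * f (a + c * s)) t.
Proof.
intro Hf; apply (continuity_pt_mult (fun _ => c) (fun s => f (a + c * s))).
- by apply continuity_pt_const.
- apply (continuity_pt_comp (fun s => a + c * s) f); [|exact Hf].
  apply derivable_continuous_pt; exists c; apply derivable_pt_lim_affine.
Qed.

Lemma smooth_with_affine g d a b : smooth_with g d -> 0 <= a -> a < b -> b <= 1 ->
  smooth_with (fun s => g (a + (b - a) * s)) (fun s => scale (b - a) (d (a + (b - a) * s))).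
Proof.
intros [[D1 [D2 [C1 C2]]] Nz] Ha Hab Hb; split; [split; [|split; [|split]]|]; simpl.
- intro t; rewrite Rmult_comm.
  exact (derivable_pt_lim_comp (fun s => a + (b - a) * s) (fun x => fst (g x)) _ _ _
    (derivable_pt_lim_affine a (b - a) t) (D1 _)).
- intro t; rewrite Rmult_comm.
  exact (derivable_pt_lim_comp (fun s => a + (b - a) * s) (fun x => snd (g x)) _ _ _
    (derivable_pt_lim_affine a (b - a) t) (D2 _)).
- intro t; exact (continuity_pt_affine_comp (fun y => fst (d y)) a (b - a) t (C1 _)).
- intro t; exact (continuity_pt_affine_comp (fun y => snd (d y)) a (b - a) t (C2 _)).
- intros t Ht E; unfold scale in E; injection E; intros E2 E1.
  pose proof (affine_between a b t ltac:(lra) Ht).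
  apply (Nz (a + (b - a) * t)); [lra|].
  apply Rmult_integral in E1; apply Rmult_integral in E2.
  destruct E1 as [E1|E1]; [lra|]; destruct E2 as [E2|E2]; [lra|].
  by destruct (d (a + (b - a) * t)); simpl in *; subst.
Qed.

Lemma curve_img_closed g h c d z : curve_cont g z -> (forall t, curve_cont h t) ->
  (forall e, 0 < e -> exists y, Rabs (y - z) < e /\ exists s, c <= s <= d /\ g y = h s) ->
  exists s, c <= s <= d /\ g z = h s.
Proof.
intros Hg Hh Hnear; apply NNPP; intro N.
destruct (curve_dist1_bounded_below h c d (g z) Hh) as [eta [Heta K]].
{ intros s Hs E; apply N; exists s; auto. }
destruct (Hg eta Heta) as [del [Hdel Kd]].
destruct (Hnear del Hdel) as [y [Hy [s [Hs Es]]]].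
pose proof (K s Hs) as Q; rewrite <- Es in Q; pose proof (Kd y Hy); lra.
Qed.

Lemma img_limit_right g c a b : curve_cont g a -> (forall t, curve_cont c t) -> a < b ->
  (forall t, a < t <= b -> img c (g t)) -> img c (g a).
Proof.
intros Hg Hc Hab Himg.
destruct (curve_img_closed g c 0 1 a Hg Hc) as [s [Hs Es]]; [|by exists s].
intros e He; exists (Rmin (a + e / 2) b).
pose proof (Rmin_l (a + e / 2) b); pose proof (Rmin_r (a + e / 2) b).
assert (a < Rmin (a + e / 2) b) by (apply Rmin_glb_lt; lra).
split; [rewrite Rabs_right; lra|].
destruct (Himg (Rmin (a + e / 2) b) ltac:(lra)) as [s [Hs Es]]; exists s; auto.
Qed.

Definition rev_curve (g : R -> point) : R -> point := fun t => g (1 - t).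

Lemma rev_curveK g : rev_curve (rev_curve g) = g.
Proof. unfold rev_curve; apply functional_extensionality; intro t; f_equal; ring. Qed.

Lemma endpoints_at_most_two (g : R -> point) p1 p2 p3 :
  is_endpoint g p1 -> is_endpoint g p2 -> is_endpoint g p3 ->
  p1 <> p2 -> p1 <> p3 -> p2 <> p3 -> False.
Proof. intros [E1|E1] [E2|E2] [E3|E3]; congruence. Qed.

Lemma rev_curve_cont g : (forall t, curve_cont g t) -> forall t, curve_cont (rev_curve g) t.
Proof.
intros Hc t e He; destruct (Hc (1 - t) e He) as [d [Hd K]]; exists d; split; auto.
intros t' Ht'; apply K; replace (1 - t' - (1 - t)) with (- (t' - t)) by ring.
rewrite Rabs_Ropp; auto.
Qed.

(** * Curves along the tracks of a drawing *)

Section Drawing.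
Variables (V : finType) (m : nat) (th0 : R) (th : V -> R) (tr dtr : 'I_m -> R -> point).
Hypothesis Htr : tracks_ok th0 th tr dtr.

Lemma track_smooth X : smooth_with (tr X) (dtr X).
Proof. by destruct Htr as [Hs _]. Qed.

Lemma track_deriv_end_neq0 X e : e = 0 \/ e = 1 -> dtr X e <> (0, 0).
Proof. intro He; apply (proj2 (track_smooth X)); destruct He; subst; lra. Qed.

Lemma track_cont X t : curve_cont (tr X) t.
Proof. exact (C1_curve_cont _ _ (proj1 (track_smooth X)) t). Qed.

Lemma track_inj X : injective_on (fun t => 0 <= t <= 1) (tr X).
Proof. by destruct Htr as [_ [Hi _]]. Qed.

Lemma sqnorm_vertex_point p : is_vertex_point th0 th p -> sqnorm p = 1.
Proof.
intros [w <-]; unfold sqnorm, vpos; simpl.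
pose proof (sin2_cos2 (th0 - th w)) as E; unfold Rsqr in E; lra.
Qed.

Definition track_interior (X : 'I_m) (p : point) : Prop := exists s, 0 < s < 1 /\ tr X s = p.

Definition node (p : point) : Prop :=
  is_vertex_point th0 th p \/ exists X, is_endpoint (tr X) p.

Lemma sqnorm_track_interior X p : track_interior X p -> sqnorm p < 1.
Proof. by destruct Htr as [_ [_ [_ [Hdisk _]]]]; intros [s [Hs <-]]; apply Hdisk. Qed.

Lemma track_interior_not_endpoint X p : track_interior X p -> ~ is_endpoint (tr X) p.
Proof. by intros [s [Hs <-]] [E|E]; apply track_inj in E; lra. Qed.

Lemma track_interior_img X p : track_interior X p -> img (tr X) p.
Proof. intros [s [Hs E]]; exists s; split; [lra|auto]. Qed.

Lemma endpoint_img X p : is_endpoint (tr X) p -> img (tr X) p.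
Proof. by intros [E|E]; [exists 0|exists 1]; split; auto; lra. Qed.

Lemma track_interior_unique X Y p : track_interior X p -> img (tr Y) p -> Y = X.
Proof.
intros HX HY; apply NNPP; intro Hne; destruct Htr as [_ [_ [Hmeet _]]].
destruct (Hmeet Y X Hne p HY (track_interior_img X p HX)) as [_ HE].
exact (track_interior_not_endpoint X p HX HE).
Qed.

Lemma node_not_track_interior X p : node p -> ~ track_interior X p.
Proof.
intros [Hv|[Y HY]] HX.
- pose proof (sqnorm_vertex_point p Hv); pose proof (sqnorm_track_interior X p HX); lra.
- rewrite <- (track_interior_unique X Y p HX (endpoint_img Y p HY)) in HX.
  exact (track_interior_not_endpoint Y p HX HY).
Qed.

Lemma interior_endpoint_junction X p :
  is_endpoint (tr X) p -> sqnorm p < 1 -> is_junction tr dtr p.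
Proof.
intros He Hs; destruct Htr as [_ [_ [_ [_ Hends]]]].
destruct (Hends X p He) as [Hv|Hj]; auto.
pose proof (sqnorm_vertex_point p Hv); lra.
Qed.

Definition track_curve (g : R -> point) : Prop :=
  (forall t, curve_cont g t) /\ injective_on (fun t => 0 <= t <= 1) g /\
  (forall t, 0 <= t <= 1 -> in_tracks tr (g t)) /\ node (g 0) /\ node (g 1).

Lemma track_curve_rev g : track_curve g -> track_curve (rev_curve g).
Proof.
intros [Hc [Hi [Hin [H0 H1]]]]; unfold rev_curve; split; [|split; [|split; [|split]]].
- exact (rev_curve_cont g Hc).
- intros s t Hs Ht E; apply Hi in E; lra.
- intros t Ht; apply Hin; lra.
- by rewrite Rminus_0_r.
- by rewrite Rminus_diag.
Qed.

Lemma nodes_isolated g tau : injective_on (fun t => 0 <= t <= 1) g ->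
  exists e, 0 < e /\ forall t, 0 <= t <= 1 -> 0 < Rabs (t - tau) < e -> ~ node (g t).
Proof.
intro Hi.
destruct (finite_uniform_pos V (fun w e => forall t, 0 <= t <= 1 ->
  0 < Rabs (t - tau) < e -> g t <> vpos th0 th w)) as [e1 [He1 K1]].
{ intros w e e' He' K t Ht Hr; apply K; auto; lra. }
{ intro w; apply injective_curve_isolated; auto. }
destruct (finite_uniform_pos 'I_m (fun i e => forall t, 0 <= t <= 1 ->
  0 < Rabs (t - tau) < e -> g t <> tr i 0 /\ g t <> tr i 1)) as [e2 [He2 K2]].
{ intros i e e' He' K t Ht Hr; apply K; auto; lra. }
{ intro i; destruct (injective_curve_isolated g (tr i 0) tau Hi) as [a [Ha Ka]].
  destruct (injective_curve_isolated g (tr i 1) tau Hi) as [b [Hb Kb]].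
  exists (Rmin a b); split; [apply Rmin_pos; auto|].
  intros t Ht Hr; pose proof (Rmin_l a b); pose proof (Rmin_r a b).
  split; [apply Ka|apply Kb]; auto; lra. }
exists (Rmin e1 e2); split; [apply Rmin_pos; auto|].
intros t Ht Hr; pose proof (Rmin_l e1 e2); pose proof (Rmin_r e1 e2).
intros [[w Hw]|[i [Hi0|Hi1]]].
- exact (K1 w t Ht ltac:(lra) (esym Hw)).
- exact (proj1 (K2 i t Ht ltac:(lra)) (esym Hi0)).
- exact (proj2 (K2 i t Ht ltac:(lra)) (esym Hi1)).
Qed.

Lemma node_or_track_interior g t : track_curve g -> 0 <= t <= 1 ->
  node (g t) \/ exists X, track_interior X (g t).
Proof.
intros [_ [_ [Hin _]]] Ht; destruct (Hin t Ht) as [j [r [Hr E]]].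
destruct (Req_dec r 0) as [->|R0]; [left; right; exists j; left; auto|].
destruct (Req_dec r 1) as [->|R1]; [left; right; exists j; right; auto|].
right; exists j, r; split; [lra|auto].
Qed.

(* the other tracks and the ends of [X] stay at positive distance from [g t] *)
Lemma track_interior_stable g X t : track_curve g -> 0 <= t <= 1 -> track_interior X (g t) ->
  exists eps, 0 < eps /\
    forall t', 0 <= t' <= 1 -> Rabs (t' - t) < eps -> track_interior X (g t').
Proof.
intros [Hc [Hi [Hin _]]] Ht HX; set (q := g t) in *.
destruct (finite_uniform_pos _ (fun j e => j <> X ->
  forall r, 0 <= r <= 1 -> e <= dist1 (tr j r) q)) as [e1 [He1 K1]].
{ intros j e e' He' K Hj r Hr; pose proof (K Hj r Hr); lra. }
{ intro j; destruct (eqVneq j X) as [->|Hne]; [by exists 1; split; [lra|]|].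
  destruct (curve_dist1_bounded_below (tr j) 0 1 q (track_cont j)) as [e [He K]].
  - intros r Hr E; move/eqP: Hne; apply; apply (track_interior_unique X j q HX).
    by exists r.
  - by exists e; split. }
assert (N0 : tr X 0 <> q) by (intro E; apply (track_interior_not_endpoint X q HX); left; auto).
assert (N1 : tr X 1 <> q) by (intro E; apply (track_interior_not_endpoint X q HX); right; auto).
pose proof (dist1_gt0 _ _ N0); pose proof (dist1_gt0 _ _ N1).
pose proof (Rmin_l e1 (Rmin (dist1 (tr X 0) q) (dist1 (tr X 1) q))).
pose proof (Rmin_r e1 (Rmin (dist1 (tr X 0) q) (dist1 (tr X 1) q))).
pose proof (Rmin_l (dist1 (tr X 0) q) (dist1 (tr X 1) q)).
pose proof (Rmin_r (dist1 (tr X 0) q) (dist1 (tr X 1) q)).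
set (e := Rmin e1 (Rmin (dist1 (tr X 0) q) (dist1 (tr X 1) q))) in *.
assert (He : 0 < e) by (repeat apply Rmin_pos; auto).
destruct (Hc t e He) as [d [Hd K]]; exists d; split; auto; intros t' Ht' Hd'.
pose proof (K t' Hd') as Kt; fold q in Kt.
destruct (Hin t' Ht') as [j [r [Hr E]]].
destruct (eqVneq j X) as [->|Hne].
- exists r; split; [|auto].
  destruct (Req_dec r 0) as [->|R0]; [rewrite <- E in Kt; lra|].
  destruct (Req_dec r 1) as [->|R1]; [rewrite <- E in Kt; lra|]; lra.
- exfalso; have Hne' : j <> X by move/eqP: Hne.
  pose proof (K1 j Hne' r Hr) as Q; rewrite E in Q; lra.
Qed.

Lemma track_interior_left_end g X t0 : track_curve g -> 0 <= t0 <= 1 ->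
  track_interior X (g t0) ->
  exists a, 0 <= a < t0 /\ (forall t, a < t <= t0 -> track_interior X (g t)) /\
    (g a = tr X 0 \/ g a = tr X 1).
Proof.
intros Hg Ht0 HX; pose proof Hg as [Hc [_ [_ [H0 _]]]].
set (E := fun t => 0 <= t <= t0 /\ ~ track_interior X (g t)).
have E0 : E 0 by split; [lra|exact (node_not_track_interior X _ H0)].
destruct (completeness E) as [a Ha]; [exists t0; intros t [Ht _]; lra|exists 0; exact E0|].
assert (Ha0 : 0 <= a) by (apply (proj1 Ha), E0).
assert (Hat : a <= t0) by (apply (proj2 Ha); intros t [Ht _]; lra).
assert (Hint : forall t, a < t <= t0 -> track_interior X (g t)).
{ intros t Ht; apply NNPP; intro N.
  pose proof (proj1 Ha t (conj (ltac:(lra) : 0 <= t <= t0) N)); lra. }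
assert (Hna : ~ track_interior X (g a)).
{ intro C; destruct (track_interior_stable g X a Hg ltac:(lra) C) as [e [He K]].
  destruct (lub_approx _ _ _ Ha He) as [t [[Ht Nt] Hlt]].
  assert (t <= a) by (apply (proj1 Ha); split; auto).
  apply Nt, K; [lra|rewrite Rabs_left1; lra]. }
assert (Hlt : a < t0) by (destruct Hat as [? | Eat]; [|subst a]; auto; contradiction).
exists a; split; [lra|]; split; auto.
destruct (img_limit_right g (tr X) a t0 (Hc a) (track_cont X) Hlt) as [s [Hs Es]].
{ intros t Ht; apply track_interior_img, Hint, Ht. }
destruct (Req_dec s 0) as [<-|S0]; [by left|].
destruct (Req_dec s 1) as [<-|S1]; [by right|].
by elim Hna; exists s; split; [lra|].
Qed.

Lemma track_interior_right_end g X t0 : track_curve g -> 0 <= t0 <= 1 ->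
  track_interior X (g t0) ->
  exists b, t0 < b <= 1 /\ (forall t, t0 <= t < b -> track_interior X (g t)) /\
    (g b = tr X 0 \/ g b = tr X 1).
Proof.
intros Hg Ht0 HX.
destruct (track_interior_left_end (rev_curve g) X (1 - t0)) as [a [Ha [K E]]].
- exact (track_curve_rev g Hg).
- lra.
- by unfold rev_curve; rewrite (_ : 1 - (1 - t0) = t0); [|ring].
- exists (1 - a); split; [lra|]; split; auto.
  intros t Ht; rewrite (_ : t = 1 - (1 - t)); [|ring]; apply K; lra.
Qed.

Lemma track_traversal g X t0 : track_curve g -> 0 <= t0 <= 1 -> track_interior X (g t0) ->
  exists a b, 0 <= a < t0 /\ t0 < b <= 1 /\
    (forall t, a < t < b -> track_interior X (g t)) /\
    ((g a = tr X 0 /\ g b = tr X 1) \/ (g a = tr X 1 /\ g b = tr X 0)) /\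
    (forall s, 0 <= s <= 1 -> exists t, a <= t <= b /\ g t = tr X s).
Proof.
intros Hg Ht0 HX; pose proof Hg as [Hc [Hi _]].
destruct (track_interior_left_end g X t0 Hg Ht0 HX) as [a [Ha [Ka Ea]]].
destruct (track_interior_right_end g X t0 Hg Ht0 HX) as [b [Hb [Kb Eb]]].
assert (Kab : forall t, a < t < b -> track_interior X (g t)).
{ intros t Ht; destruct (Rle_dec t t0); [apply Ka|apply Kb]; lra. }
assert (Hends : (g a = tr X 0 /\ g b = tr X 1) \/ (g a = tr X 1 /\ g b = tr X 0)).
{ assert (Hab : g a <> g b) by (intro E; apply Hi in E; lra).
  destruct Ea as [Ea|Ea], Eb as [Eb|Eb]; try (elim Hab; congruence); auto. }
exists a, b; do 4 (split; [lra || auto|]).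
apply (curve_onto_injective_curve g (tr X) a b Hc (track_cont X) (track_inj X)); [lra| |auto].
intros t Ht; destruct (Req_dec t a) as [->|Na]; [|destruct (Req_dec t b) as [->|Nb]].
- destruct Ea as [Ea|Ea]; rewrite Ea; apply endpoint_img; [left|right]; auto.
- destruct Eb as [Eb|Eb]; rewrite Eb; apply endpoint_img; [left|right]; auto.
- apply track_interior_img, Kab; lra.
Qed.

Lemma track_from_node_right g tau : track_curve g -> 0 <= tau < 1 -> node (g tau) ->
  exists X b, tau < b <= 1 /\ (forall t, tau < t < b -> track_interior X (g t)) /\
    is_endpoint (tr X) (g tau) /\ is_endpoint (tr X) (g b) /\
    (forall s, 0 <= s <= 1 -> exists t, tau <= t <= b /\ g t = tr X s).
Proof.
intros Hg Ht Hc; pose proof Hg as [_ [Hi _]].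
destruct (nodes_isolated g tau Hi) as [e [He K]].
pose proof (Rmin_l e (1 - tau)); pose proof (Rmin_r e (1 - tau)).
assert (0 < Rmin e (1 - tau)) by (apply Rmin_pos; lra).
set (t1 := tau + Rmin e (1 - tau) / 2) in *.
assert (Nc : ~ node (g t1)) by (apply K; [|rewrite Rabs_right]; unfold t1; lra).
destruct (node_or_track_interior g t1 Hg ltac:(unfold t1; lra)) as [C|[X HX]];
  [contradiction|].
destruct (track_traversal g X t1 Hg ltac:(unfold t1; lra) HX)
  as [a [b [Ha [Hb [Kab [Ends Cov]]]]]].
assert (Hend_a : is_endpoint (tr X) (g a)) by (destruct Ends as [[E _]|[E _]]; [left|right]; auto).
assert (Ea : a = tau).
{ destruct (Rtotal_order a tau) as [L|[Eq|G]]; auto; exfalso.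
  - apply (node_not_track_interior X _ Hc), Kab; unfold t1 in *; lra.
  - apply (K a); [lra|rewrite Rabs_right; unfold t1 in *; lra|right; exists X; auto]. }
subst a; exists X, b; split; [lra|]; split; [intros t Ht'; apply Kab; lra|].
split; [auto|]; split; [destruct Ends as [[_ E]|[_ E]]; [right|left]; auto|auto].
Qed.

Lemma track_from_node_left g tau : track_curve g -> 0 < tau <= 1 -> node (g tau) ->
  exists X a, 0 <= a < tau /\ (forall t, a < t < tau -> track_interior X (g t)) /\
    is_endpoint (tr X) (g tau) /\ is_endpoint (tr X) (g a) /\
    (forall s, 0 <= s <= 1 -> exists t, a <= t <= tau /\ g t = tr X s).
Proof.
intros Hg Ht Hc.
have Etau : 1 - (1 - tau) = tau by ring.
destruct (track_from_node_right (rev_curve g) (1 - tau) (track_curve_rev g Hg))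
  as [X [b [Hb [K [E1 [E2 Cov]]]]]]; unfold rev_curve in *; rewrite ?Etau; [lra|auto|].
rewrite Etau in E1.
exists X, (1 - b); split; [lra|]; split.
- intros t Ht'; rewrite (_ : t = 1 - (1 - t)); [|ring]; apply K; lra.
- do 2 (split; auto).
  intros s Hs; destruct (Cov s Hs) as [t [Ht' Et]]; exists (1 - t); split; [lra|auto].
Qed.

Lemma track_tangent_parallel g d tau Z : has_C1_deriv g d -> 0 <= tau <= 1 ->
  is_endpoint (tr Z) (g tau) ->
  (forall del, 0 < del -> exists t, 0 < Rabs (t - tau) < del /\ img (tr Z) (g t)) ->
  exists e, (e = 0 \/ e = 1) /\ tr Z e = g tau /\ parallel (d tau) (dtr Z e).
Proof.
intros [D1 [D2 _]] Htau EZ Hnear; pose proof (track_smooth Z) as [[T1 [T2 _]] Tnz].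
have [e [He Ee]] : exists e, (e = 0 \/ e = 1) /\ tr Z e = g tau.
{ by destruct EZ as [E|E]; [exists 0|exists 1]; auto. }
have He' : 0 <= e <= 1 by destruct He; subst; lra.
exists e; do 2 (split; auto).
apply (tangent_parallel g (d tau) tau (tr Z) (dtr Z e) e); auto.
- exact (track_cont Z).
- exact (track_inj Z).
- intros del Hdel; destruct (Hnear del Hdel) as [t [Ht [r [Hr Er]]]].
  by exists t; split; [|exists r].
Qed.

Lemma node_tangent_parallel g d tau : track_curve g -> has_C1_deriv g d -> 0 <= tau <= 1 ->
  node (g tau) -> exists Z e, (e = 0 \/ e = 1) /\ tr Z e = g tau /\ parallel (d tau) (dtr Z e).
Proof.
intros Hg Hd Htau Hn; destruct (Rlt_dec tau 1) as [L|L].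
- destruct (track_from_node_right g tau Hg ltac:(lra) Hn) as [Z [b [Hb [KZ [EZ _]]]]].
  exists Z; apply (track_tangent_parallel g d tau Z Hd Htau EZ); intros del Hdel.
  pose proof (Rmin_l del (b - tau)); pose proof (Rmin_r del (b - tau)).
  assert (0 < Rmin del (b - tau)) by (apply Rmin_pos; lra).
  exists (tau + Rmin del (b - tau) / 2); split.
  + replace (tau + Rmin del (b - tau) / 2 - tau) with (Rmin del (b - tau) / 2) by ring.
    rewrite Rabs_right; lra.
  + apply track_interior_img, KZ; lra.
- destruct (track_from_node_left g tau Hg ltac:(lra) Hn) as [Z [a [Ha [KZ [EZ _]]]]].
  exists Z; apply (track_tangent_parallel g d tau Z Hd Htau EZ); intros del Hdel.
  pose proof (Rmin_l del (tau - a)); pose proof (Rmin_r del (tau - a)).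
  assert (0 < Rmin del (tau - a)) by (apply Rmin_pos; lra).
  exists (tau - Rmin del (tau - a) / 2); split.
  + replace (tau - Rmin del (tau - a) / 2 - tau) with (- (Rmin del (tau - a) / 2)) by ring.
    rewrite Rabs_Ropp Rabs_right; lra.
  + apply track_interior_img, KZ; lra.
Qed.

(** * Arcs of edge curves between vertices of [S] *)

Variables (adj : rel V) (S : {set V}).
Hypothesis Hdr : draws th0 th tr dtr adj.

Definition S_edge_curve (g : R -> point) : Prop :=
  exists u v, u \in S /\ v \in S /\ edge_curve th0 th tr u v g.

Definition S_curve (g : R -> point) : Prop := S_edge_curve g \/ S_edge_curve (rev_curve g).

Lemma edge_curve_track_curve u v g : edge_curve th0 th tr u v g -> track_curve g.
Proof.
intro Hec; pose proof Hec as [[d Hs] [Hi0 [Hi1 [E0 [E1 [Hin _]]]]]].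
assert (Hloop : g 0 <> g 1).
{ intro E; apply (proj1 (proj2 Hdr) u g).
  destruct Hec as [Hs' [Hi0' [Hi1' [E0' [_ Hrest]]]]].
  exact (conj Hs' (conj Hi0' (conj Hi1' (conj E0' (conj (eq_trans (esym E) E0') Hrest))))). }
split; [exact (C1_curve_cont g d (proj1 Hs))|]; split; [|split; [|split]].
- intros s t Hs' Ht' E.
  destruct (Rle_lt_dec 1 s) as [S1|S1]; destruct (Rle_lt_dec 1 t) as [T1|T1]; try lra.
  + destruct (Req_dec t 0) as [T0|T0]; [|apply Hi1; auto; lra].
    by elim Hloop; rewrite -T0 -E; f_equal; lra.
  + destruct (Req_dec s 0) as [S0|S0]; [|apply Hi1; auto; lra].
    by elim Hloop; rewrite -S0 E; f_equal; lra.
  + apply Hi0; auto; lra.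
- intros t Ht; apply Hin; exists t; split; auto.
- by left; exists u.
- by left; exists v.
Qed.

Lemma S_curve_rev g : S_curve g -> S_curve (rev_curve g).
Proof. by rewrite /S_curve rev_curveK; case; [right|left]. Qed.

Lemma S_curve_track_curve g : S_curve g -> track_curve g.
Proof.
case=> [[u [v [_ [_ H]]]]|[u [v [_ [_ H]]]]]; [exact (edge_curve_track_curve u v g H)|].
rewrite -(rev_curveK g); exact (track_curve_rev _ (edge_curve_track_curve u v _ H)).
Qed.

Lemma S_curve_not_vertex g t : S_curve g -> 0 < t < 1 -> ~ is_vertex_point th0 th (g t).
Proof.
intros [[u [v [_ [_ [_ [_ [_ [_ [_ [_ Hnv]]]]]]]]]]|[u [v [_ [_ [_ [_ [_ [_ [_ [_ Hnv]]]]]]]]]]] Ht.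
- exact (Hnv t Ht).
- rewrite (_ : g t = rev_curve g (1 - t)); [|by unfold rev_curve; f_equal; ring].
  exact (Hnv (1 - t) ltac:(lra)).
Qed.

Lemma S_curve_ends g : S_curve g ->
  (exists u, u \in S /\ g 0 = vpos th0 th u) /\ (exists u, u \in S /\ g 1 = vpos th0 th u).
Proof.
intros [[u [v [Hu [Hv H]]]]|[u [v [Hu [Hv H]]]]];
  destruct H as [_ [_ [_ [E0 [E1 _]]]]]; unfold rev_curve in E0, E1.
- by split; [exists u|exists v].
- rewrite Rminus_0_r in E0; rewrite Rminus_diag in E1; by split; [exists v|exists u].
Qed.

(* inner nodes of [S]-curves are not vertices, hence junctions *)
Lemma S_curve_inner_node g t : S_curve g -> 0 < t < 1 -> node (g t) -> sqnorm (g t) < 1.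
Proof.
intros Hs Ht [Hv|[X HX]]; [by elim (S_curve_not_vertex g t Hs Ht)|].
destruct Htr as [_ [_ [_ [_ Hends]]]]; destruct (Hends X (g t) HX) as [Hv|[Hj _]]; auto.
by elim (S_curve_not_vertex g t Hs Ht).
Qed.

Definition used_track (X : 'I_m) : Prop :=
  exists g, S_curve g /\ exists t, 0 <= t <= 1 /\ track_interior X (g t).

Lemma used_track_of g t X : S_curve g -> 0 <= t <= 1 -> track_interior X (g t) -> used_track X.
Proof. by intros Hs Ht HX; exists g; split; [|exists t]. Qed.

Definition used_junction (p : point) : Prop :=
  sqnorm p < 1 /\ exists X1 X2 X3, X1 <> X2 /\ X1 <> X3 /\ X2 <> X3 /\
    used_track X1 /\ used_track X2 /\ used_track X3 /\
    is_endpoint (tr X1) p /\ is_endpoint (tr X2) p /\ is_endpoint (tr X3) p.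

(* the vertices and junctions of the new drawing *)
Definition break_point (p : point) : Prop :=
  (exists u, u \in S /\ p = vpos th0 th u) \/ used_junction p.

Lemma break_point_node p : break_point p -> node p.
Proof.
intros [[u [_ ->]]|[_ [X1 [_ [_ [_ [_ [_ [_ [_ [_ [H _]]]]]]]]]]]].
- by left; exists u.
- by right; exists X1.
Qed.

Lemma track_interior_not_break_point X p : track_interior X p -> ~ break_point p.
Proof. intros HX HB; exact (node_not_track_interior X p (break_point_node p HB) HX). Qed.

Lemma break_points_isolated g tau : track_curve g -> exists e, 0 < e /\
  forall t, 0 <= t <= 1 -> 0 < Rabs (t - tau) < e -> ~ break_point (g t).
Proof.
intros [_ [Hi _]]; destruct (nodes_isolated g tau Hi) as [e [He K]]; exists e; split; auto.
intros t Ht Hr HB; exact (K t Ht Hr (break_point_node _ HB)).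
Qed.

Lemma S_curve_break_point0 g : S_curve g -> break_point (g 0).
Proof. by case/S_curve_ends=> [[u [Hu E]] _]; left; exists u. Qed.

Lemma S_curve_break_point1 g : S_curve g -> break_point (g 1).
Proof. by case/S_curve_ends=> [_ [u [Hu E]]]; left; exists u. Qed.

(* the tracks of the new drawing are reparametrized arcs *)
Definition S_arc (g : R -> point) (a b : R) : Prop :=
  S_curve g /\ (0 <= a /\ a < b /\ b <= 1) /\ break_point (g a) /\ break_point (g b) /\
  forall t, a < t < b -> ~ break_point (g t).

Lemma S_arc_rev g a b : S_arc g a b -> S_arc (rev_curve g) (1 - b) (1 - a).
Proof.
intros [Hs [Hab [Ha [Hb K]]]]; split; [exact (S_curve_rev g Hs)|].
unfold rev_curve; rewrite (_ : 1 - (1 - b) = b); [|ring]; rewrite (_ : 1 - (1 - a) = a); [|ring].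
do 3 (split; [lra || auto|]); intros t Ht; apply K; lra.
Qed.

Lemma S_arc_around_right g tau : S_curve g -> 0 <= tau < 1 ->
  exists a b, S_arc g a b /\ a <= tau < b.
Proof.
intros Hs Ht; pose proof (S_curve_track_curve g Hs) as Hg.
assert (Iso : forall x y t, 0 <= x -> y <= 1 -> x <= t <= y -> exists e, 0 < e /\
  forall t', x <= t' <= y -> 0 < Rabs (t' - t) < e -> ~ break_point (g t')).
{ intros x y t0 Hx Hy Ht0; destruct (break_points_isolated g t0 Hg) as [e0 [He0 K0]].
  exists e0; split; auto; intros t' Ht' Hr; apply K0; auto; lra. }
destruct (break_points_isolated g tau Hg) as [e [He K]].
pose proof (Rmin_l e (1 - tau)); pose proof (Rmin_r e (1 - tau)).
assert (0 < Rmin e (1 - tau)) by (apply Rmin_pos; lra).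
set (c := tau + Rmin e (1 - tau) / 2) in *.
destruct (last_point (fun t => break_point (g t)) 0 tau ltac:(lra) (S_curve_break_point0 g Hs)
  (fun t => Iso 0 tau t ltac:(lra) ltac:(lra))) as [a [Ha [Pa Ka]]].
destruct (first_point (fun t => break_point (g t)) c 1 ltac:(unfold c; lra)
  (S_curve_break_point1 g Hs) (fun t => Iso c 1 t ltac:(unfold c; lra) ltac:(lra)))
  as [b [Hb [Pb Kb]]].
exists a, b; split; [|unfold c in *; lra].
do 4 (split; [unfold c in *; lra || auto|]).
intros t Ht'; destruct (Rle_dec t tau) as [L|L]; [apply Ka; lra|].
destruct (Rlt_dec t c) as [L2|L2]; [|apply Kb; lra].
apply K; [lra|]; unfold c in *; rewrite Rabs_right; lra.
Qed.

Lemma S_arc_around g tau : S_curve g -> 0 <= tau <= 1 -> exists a b, S_arc g a b /\ a <= tau <= b.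
Proof.
intros Hs Ht; destruct (Rlt_dec tau 1) as [L|L].
- destruct (S_arc_around_right g tau Hs ltac:(lra)) as [a [b [H1 H2]]].
  by exists a, b; split; [|lra].
- destruct (S_arc_around_right (rev_curve g) (1 - tau) (S_curve_rev g Hs) ltac:(lra))
    as [a [b [Hsub Hab]]].
  apply S_arc_rev in Hsub; rewrite rev_curveK in Hsub.
  by exists (1 - b), (1 - a); split; [|lra].
Qed.

Lemma S_arc_lower_bound g a b s al X : S_arc g a b -> a < s -> al < s ->
  (forall x, al < x < s -> track_interior X (g x)) -> a <= al.
Proof.
intros [_ [_ [Ha _]]] H1 H2 K; apply Rnot_lt_le; intro L.
exact (track_interior_not_break_point X _ (K a ltac:(lra)) Ha).
Qed.

Lemma S_arc_upper_bound g a b s be X : S_arc g a b -> s < b -> s < be ->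
  (forall x, s < x < be -> track_interior X (g x)) -> be <= b.
Proof.
intros [_ [_ [_ [Hb _]]]] H1 H2 K; apply Rnot_lt_le; intro L.
exact (track_interior_not_break_point X _ (K b ltac:(lra)) Hb).
Qed.

Lemma S_arc_inside g a b t X : S_arc g a b -> a <= t <= b -> track_interior X (g t) -> a < t < b.
Proof.
intros [_ [_ [Ha [Hb _]]]] Ht HX.
destruct (Req_dec t a) as [->|Na]; [by elim (track_interior_not_break_point X _ HX Ha)|].
destruct (Req_dec t b) as [->|Nb]; [by elim (track_interior_not_break_point X _ HX Hb)|]; lra.
Qed.

Lemma S_arc_traversal g a b X t : S_arc g a b -> a < t < b -> track_interior X (g t) ->
  exists al be, a <= al < t /\ t < be <= b /\
    (forall x, al < x < be -> track_interior X (g x)) /\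
    ((g al = tr X 0 /\ g be = tr X 1) \/ (g al = tr X 1 /\ g be = tr X 0)) /\
    (forall s, 0 <= s <= 1 -> exists x, al <= x <= be /\ g x = tr X s).
Proof.
intros Hsub Ht HX; pose proof Hsub as [Hs [Hab _]].
destruct (track_traversal g X t (S_curve_track_curve g Hs) ltac:(lra) HX)
  as [al [be [Hal [Hbe [K [E C]]]]]].
have c1 : a <= al.
{ by apply (S_arc_lower_bound g a b t al X Hsub); try lra; intros x Hx; apply K; lra. }
have c2 : be <= b.
{ by apply (S_arc_upper_bound g a b t be X Hsub); try lra; intros x Hx; apply K; lra. }
by exists al, be; do 2 (split; [lra|]).
Qed.

Lemma S_arc_node_sides g a b t : S_arc g a b -> a < t < b -> node (g t) ->
  exists X Y eps, X <> Y /\ 0 < eps /\ used_track X /\ used_track Y /\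
    is_endpoint (tr X) (g t) /\ is_endpoint (tr Y) (g t) /\
    (forall t', t - eps < t' < t -> track_interior X (g t')) /\
    (forall t', t < t' < t + eps -> track_interior Y (g t')) /\
    (forall r, 0 <= r <= 1 -> exists x, a <= x <= b /\ g x = tr X r) /\
    (forall r, 0 <= r <= 1 -> exists x, a <= x <= b /\ g x = tr Y r).
Proof.
intros Hsub Ht Hn; pose proof Hsub as [Hs [Hab _]].
pose proof (S_curve_track_curve g Hs) as Hg; pose proof Hg as [_ [Hi _]].
destruct (track_from_node_left g t Hg ltac:(lra) Hn) as [X [al [Hal [KX [EX [EX' CX]]]]]].
destruct (track_from_node_right g t Hg ltac:(lra) Hn) as [Y [be [Hbe [KY [EY [EY' CY]]]]]].
have Hal' : a <= al by apply (S_arc_lower_bound g a b t al X Hsub); auto; lra.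
have Hbe' : be <= b by apply (S_arc_upper_bound g a b t be Y Hsub); auto; lra.
pose proof (Rmin_l (t - al) (be - t)); pose proof (Rmin_r (t - al) (be - t)).
exists X, Y, (Rmin (t - al) (be - t)); split.
{ intro XY; subst Y; apply (endpoints_at_most_two (tr X) (g t) (g al) (g be)); auto;
    intro Q; apply Hi in Q; lra. }
split; [apply Rmin_pos; lra|].
split; [apply (used_track_of g ((al + t) / 2)); auto; [lra|apply KX; lra]|].
split; [apply (used_track_of g ((t + be) / 2)); auto; [lra|apply KY; lra]|].
do 2 (split; auto).
split; [intros t' Ht'; apply KX; lra|].
split; [intros t' Ht'; apply KY; lra|].
split; intros r Hr; [destruct (CX r Hr) as [x [Hx Ex]]|destruct (CY r Hr) as [x [Hx Ex]]];
  exists x; split; auto; lra.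
Qed.

(* [g t] is not a break point, so the two tracks meeting there are the only used ones *)
Lemma S_arcs_meet_at_node g a b h c d t s : S_arc g a b -> S_arc h c d -> a < t < b ->
  c < s < d -> g t = h s -> node (g t) ->
  exists eps, 0 < eps /\ forall t', Rabs (t' - t) < eps -> exists s', c <= s' <= d /\ g t' = h s'.
Proof.
intros Hgs Hhs Ht Hs E Hn; pose proof Hgs as [Hsg [Hab [_ [_ Kg]]]].
have Hn' : node (h s) by rewrite -E.
destruct (S_arc_node_sides g a b t Hgs Ht Hn)
  as [X [Y [eps [XY [Heps [RX [RY [EX [EY [KX [KY _]]]]]]]]]]].
destruct (S_arc_node_sides h c d s Hhs Hs Hn')
  as [X' [Y' [_ [XY' [_ [RX' [RY' [EX' [EY' [_ [_ [CX' CY']]]]]]]]]]]].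
rewrite -E in EX' EY'.
have Htwo : forall Z, used_track Z -> is_endpoint (tr Z) (g t) -> Z = X \/ Z = Y.
{ intros Z RZ EZ; apply NNPP; intro N; apply (Kg t Ht); right.
  split; [apply (S_curve_inner_node g t Hsg); auto; lra|].
  exists X, Y, Z; do 3 (split; [auto; intro; apply N; auto|]); auto 10. }
have Cov : forall Z, Z = X \/ Z = Y ->
  forall r, 0 <= r <= 1 -> exists x, c <= x <= d /\ h x = tr Z r.
{ destruct (Htwo X' RX' EX') as [->| ->]; destruct (Htwo Y' RY' EY') as [->| ->];
    try (by elim XY'); intros Z [->| ->]; auto. }
exists eps; split; auto; intros t' Ht'; apply Rabs_def2 in Ht'.
destruct (Rtotal_order t' t) as [L|[->|G]].
- destruct (KX t' ltac:(lra)) as [r [Hr Er]].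
  destruct (Cov X (or_introl erefl) r ltac:(lra)) as [x [Hx Ex]].
  by exists x; split; [|rewrite -Er Ex].
- by exists s; split; [lra|].
- destruct (KY t' ltac:(lra)) as [r [Hr Er]].
  destruct (Cov Y (or_intror erefl) r ltac:(lra)) as [x [Hx Ex]].
  by exists x; split; [|rewrite -Er Ex].
Qed.

Lemma S_arcs_meet_locally g a b h c d t s : S_arc g a b -> S_arc h c d -> a < t < b ->
  c < s < d -> g t = h s ->
  exists eps, 0 < eps /\ forall t', Rabs (t' - t) < eps -> exists s', c <= s' <= d /\ g t' = h s'.
Proof.
intros Hgs Hhs Ht Hs E; pose proof Hgs as [Hsg [Hab _]].
destruct (node_or_track_interior g t (S_curve_track_curve g Hsg) ltac:(lra)) as [Hn|[X HX]].
{ exact (S_arcs_meet_at_node g a b h c d t s Hgs Hhs Ht Hs E Hn). }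
destruct (S_arc_traversal g a b X t Hgs Ht HX) as [al [be [Hal [Hbe [KX _]]]]].
have HX' : track_interior X (h s) by rewrite -E.
destruct (S_arc_traversal h c d X s Hhs Hs HX') as [gm [dl [Hgm [Hdl [_ [_ CX]]]]]].
pose proof (Rmin_l (t - al) (be - t)); pose proof (Rmin_r (t - al) (be - t)).
exists (Rmin (t - al) (be - t)); split; [apply Rmin_pos; lra|].
intros t' Ht'; apply Rabs_def2 in Ht'.
destruct (KX t' ltac:(lra)) as [r [Hr Er]]; destruct (CX r ltac:(lra)) as [x [Hx Ex]].
by exists x; split; [lra|rewrite -Er Ex].
Qed.

(* the set of [t'] with [g t'] on [h] is closed and, by [S_arcs_meet_locally], open *)
Lemma S_arcs_meet_contained_right g a b h c d t s : S_arc g a b -> S_arc h c d ->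
  a < t < b -> c < s < d -> g t = h s ->
  forall t', t <= t' <= b -> exists s', c <= s' <= d /\ g t' = h s'.
Proof.
intros Hgs Hhs Ht Hs E.
pose proof Hgs as [Hsg [Hab [_ [_ Kg]]]]; pose proof Hhs as [Hsh [_ [Hhc [Hhd _]]]].
pose proof (S_curve_track_curve g Hsg) as [Cg _]; pose proof (S_curve_track_curve h Hsh) as [Ch _].
set (P := fun x => exists s', c <= s' <= d /\ g x = h s').
set (Ee := fun x => t <= x <= b /\ forall y, t <= y <= x -> P y).
have Pt : P t by exists s; split; [lra|].
have Et : Ee t by split; [lra|]; intros y Hy; rewrite (_ : y = t); [|lra].
destruct (completeness Ee) as [z Hz]; [exists b; intros x [Hx _]; lra|by exists t|].
have Htz : t <= z := proj1 Hz t Et.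
have Hzb : z <= b by apply (proj2 Hz); intros x [Hx _]; lra.
have Below : forall y, t <= y < z -> P y.
{ intros y Hy; destruct (lub_approx _ _ (z - y) Hz ltac:(lra)) as [x [[Hx Kx] Hxy]].
  apply Kx; lra. }
have Pz : P z.
{ destruct (Req_dec z t) as [->|Nz]; [exact Pt|].
  apply (curve_img_closed g h c d z (Cg z) Ch); intros e He.
  exists (Rmax t (z - e / 2)); split.
  - unfold Rmax; destruct Rle_dec; rewrite Rabs_left1; lra.
  - apply Below; split; [apply Rmax_l|apply Rmax_lub_lt; lra]. }
have Zb : z = b.
{ apply NNPP; intro Nz; destruct Pz as [s' [Hs' Es']].
  have Hs'' : c < s' < d.
  { destruct (Req_dec s' c) as [->|N1]; [by elim (Kg z ltac:(lra)); rewrite Es'|].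
    destruct (Req_dec s' d) as [->|N2]; [by elim (Kg z ltac:(lra)); rewrite Es'|]; lra. }
  destruct (S_arcs_meet_locally g a b h c d z s' Hgs Hhs ltac:(lra) Hs'' Es') as [e [He Ke]].
  pose proof (Rmin_l (z + e / 2) b); pose proof (Rmin_r (z + e / 2) b).
  assert (z < Rmin (z + e / 2) b) by (apply Rmin_glb_lt; lra).
  have Ex : Ee (Rmin (z + e / 2) b).
  { split; [lra|]; intros y Hy; destruct (Rlt_dec y z) as [L|L]; [apply Below; lra|].
    apply Ke; rewrite Rabs_right; lra. }
  pose proof (proj1 Hz _ Ex); lra. }
intros t' Ht'; destruct (Rlt_dec t' z) as [L|L]; [apply Below; lra|].
by rewrite (_ : t' = z); [|lra].
Qed.

Lemma S_arcs_meet_contained g a b h c d t s : S_arc g a b -> S_arc h c d ->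
  a < t < b -> c < s < d -> g t = h s ->
  forall t', a <= t' <= b -> exists s', c <= s' <= d /\ g t' = h s'.
Proof.
intros Hgs Hhs Ht Hs E t' Ht'.
destruct (Rle_dec t t') as [L|L].
{ exact (S_arcs_meet_contained_right g a b h c d t s Hgs Hhs Ht Hs E t' ltac:(lra)). }
have E1 : forall x, 1 - (1 - x) = x by intro; ring.
destruct (S_arcs_meet_contained_right (rev_curve g) (1 - b) (1 - a) h c d (1 - t) s
  (S_arc_rev g a b Hgs) Hhs ltac:(lra) Hs) with (t' := 1 - t') as [x [Hx Ex]].
- by unfold rev_curve; rewrite E1.
- lra.
- by exists x; unfold rev_curve in Ex; rewrite E1 in Ex.
Qed.

(** * One chosen arc through each used track *)

Record arc := Arc { arc_curve : R -> point; arc_deriv : R -> point; arc_lo : R; arc_hi : R }.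

Definition arc_img (A : arc) (p : point) : Prop :=
  exists t, arc_lo A <= t <= arc_hi A /\ arc_curve A t = p.

Definition arc_through (X : 'I_m) (A : arc) : Prop :=
  S_edge_curve (arc_curve A) /\ smooth_with (arc_curve A) (arc_deriv A) /\
  S_arc (arc_curve A) (arc_lo A) (arc_hi A) /\
  exists t, arc_lo A < t < arc_hi A /\ track_interior X (arc_curve A t).

Lemma arc_through_exists X : used_track X -> exists A, arc_through X A.
Proof.
intros [h [Hs [t [Ht HX]]]].
have [g [t0 [Hsec [Ht0 HX0]]]] : exists g t0, S_edge_curve g /\ 0 <= t0 <= 1 /\
  track_interior X (g t0).
{ destruct Hs as [Hs|Hs]; [by exists h, t|].
  by exists (rev_curve h), (1 - t); unfold rev_curve; rewrite (_ : 1 - (1 - t) = t); [|ring];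
    do 2 (split; [lra || auto|]). }
pose proof Hsec as [u [v [_ [_ [[d Hd] _]]]]].
destruct (S_arc_around g t0 (or_introl Hsec) Ht0) as [a [b [Hsub Hab]]].
exists (Arc g d a b); do 3 (split; auto).
by exists t0; split; [apply (S_arc_inside g a b t0 X Hsub Hab)|].
Qed.

Definition arc_of (X : 'I_m) : arc :=
  epsilon (inhabits (Arc (fun _ => (0, 0)) (fun _ => (0, 0)) 0 0)) (arc_through X).

Lemma arc_ofP X : used_track X -> arc_through X (arc_of X).
Proof. intro HX; exact (epsilon_spec _ _ (arc_through_exists X HX)). Qed.

Lemma arc_through_bounds X A : arc_through X A ->
  0 <= arc_lo A /\ arc_lo A < arc_hi A /\ arc_hi A <= 1.
Proof. by case=> [_ [_ [[_ [H _]] _]]]. Qed.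

Lemma arc_through_img_track X A : arc_through X A -> forall s, 0 <= s <= 1 -> arc_img A (tr X s).
Proof.
intros [_ [_ [Hsub [t [Ht HX]]]]] s Hs.
destruct (S_arc_traversal _ _ _ X t Hsub Ht HX) as [al [be [H1 [H2 [_ [_ C]]]]]].
destruct (C s Hs) as [x [Hx Ex]]; exists x; split; auto; lra.
Qed.

Lemma arc_through_img_break_point X A p : arc_through X A -> arc_img A p -> break_point p ->
  p = arc_curve A (arc_lo A) \/ p = arc_curve A (arc_hi A).
Proof.
intros [_ [_ [[_ [_ [_ [_ K]]]] _]]] [t [Ht <-]] HB.
destruct (Req_dec t (arc_lo A)) as [->|N1]; [by left|].
destruct (Req_dec t (arc_hi A)) as [->|N2]; [by right|].
by elim (K t ltac:(lra)).
Qed.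

Lemma arc_through_inner_meet X Y A B t : arc_through X A -> arc_through Y B ->
  arc_lo A < t < arc_hi A -> arc_img B (arc_curve A t) -> forall p, arc_img A p <-> arc_img B p.
Proof.
intros [_ [_ [HsA _]]] [_ [_ [HsB _]]] Ht [s [Hs Es]].
pose proof HsA as [_ [_ [_ [_ KA]]]]; pose proof HsB as [_ [_ [HaB [HbB _]]]].
have Hs' : arc_lo B < s < arc_hi B.
{ destruct (Req_dec s (arc_lo B)) as [E|N1]; [by elim (KA t Ht); rewrite -Es E|].
  destruct (Req_dec s (arc_hi B)) as [E|N2]; [by elim (KA t Ht); rewrite -Es E|]; lra. }
intro p; split; intros [x [Hx <-]].
- destruct (S_arcs_meet_contained _ _ _ _ _ _ t s HsA HsB Ht Hs' (esym Es) x Hx) as [y [Hy Ey]].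
  by exists y; split.
- destruct (S_arcs_meet_contained _ _ _ _ _ _ s t HsB HsA Hs' Ht Es x Hx) as [y [Hy Ey]].
  by exists y; split.
Qed.

Lemma S_arc_in_arc_of g a b Y t : S_arc g a b -> a < t < b -> track_interior Y (g t) ->
  used_track Y /\ forall t', a <= t' <= b -> arc_img (arc_of Y) (g t').
Proof.
intros Hsub Ht HY; pose proof Hsub as [Hs [Hab [_ [_ Kb]]]].
have RY : used_track Y by apply (used_track_of g t); auto; lra.
split; auto; pose proof (arc_ofP Y RY) as HA; pose proof HA as [_ [_ [HsA _]]].
destruct HY as [r [Hr Er]].
destruct (arc_through_img_track Y _ HA r ltac:(lra)) as [s [Hs' Es]].
pose proof HsA as [_ [_ [HaA [HbA _]]]].
have Hs'' : arc_lo (arc_of Y) < s < arc_hi (arc_of Y).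
{ destruct (Req_dec s (arc_lo (arc_of Y))) as [E|N1]; [by elim (Kb t Ht); rewrite -Er -Es E|].
  destruct (Req_dec s (arc_hi (arc_of Y))) as [E|N2]; [by elim (Kb t Ht); rewrite -Er -Es E|].
  lra. }
intros t' Ht'.
destruct (S_arcs_meet_contained g a b _ _ _ t s Hsub HsA Ht Hs'' ltac:(congruence) t' Ht')
  as [x [Hx Ex]].
by exists x; split.
Qed.

Definition same_arc (X Y : 'I_m) : Prop :=
  forall p, arc_img (arc_of X) p <-> arc_img (arc_of Y) p.

Lemma same_arc_sym X Y : same_arc X Y -> same_arc Y X.
Proof. by intros H p; split; apply H. Qed.

Lemma same_arc_trans X Y Z : same_arc X Y -> same_arc Y Z -> same_arc X Z.
Proof. by intros H1 H2 p; rewrite H1 H2. Qed.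

Definition arc_rep (X : 'I_m) : Prop :=
  used_track X /\ forall Y : 'I_m, used_track Y -> (Y < X)%N -> ~ same_arc Y X.

Definition prop_bool (P : Prop) : bool := if excluded_middle_informative P then true else false.

Lemma prop_boolP (P : Prop) : reflect P (prop_bool P).
Proof. by rewrite /prop_bool; case: excluded_middle_informative => H; constructor. Qed.

Lemma arc_rep_exists X : used_track X -> exists R, arc_rep R /\ same_arc R X.
Proof.
intro RX.
have HX : prop_bool (used_track X /\ same_arc X X) by apply/prop_boolP; split; [|intro p].
case: (@arg_minnP _ X (fun Y => prop_bool (used_track Y /\ same_arc Y X)) (@nat_of_ord m) HX)
  => R /prop_boolP [RR KR] Hmin.
exists R; split; [split; auto|exact KR].
intros Y RY LY KY; have /Hmin : prop_bool (used_track Y /\ same_arc Y X).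
{ by apply/prop_boolP; split; [|apply (same_arc_trans Y R X)]. }
by rewrite leqNgt LY.
Qed.

Lemma arc_rep_distinct X Y : arc_rep X -> arc_rep Y -> X <> Y -> ~ same_arc X Y.
Proof.
intros [RX KX] [RY KY] Ne KXY; case: (ltngtP X Y) => [L|L|E].
- exact (KY X RX L KXY).
- exact (KX Y RY L (same_arc_sym _ _ KXY)).
- exact (Ne (val_inj E)).
Qed.

Definition rep_tracks : {set 'I_m} := [set X | prop_bool (arc_rep X)].

Definition rep_of (k : 'I_#|rep_tracks|) : 'I_m := enum_val k.

Lemma rep_ofP k : arc_rep (rep_of k).
Proof. by move: (enum_valP k); rewrite inE => /prop_boolP. Qed.

Lemma rep_of_onto R : arc_rep R -> exists k, rep_of k = R.
Proof.
intro HR; have HRs : R \in rep_tracks by rewrite inE; apply/prop_boolP.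
by exists (enum_rank_in HRs R); apply (enum_rankK_in HRs HRs).
Qed.

Lemma used_rep_of k : used_track (rep_of k).
Proof. exact (proj1 (rep_ofP k)). Qed.

Lemma arc_of_rep_ofP k : arc_through (rep_of k) (arc_of (rep_of k)).
Proof. exact (arc_ofP _ (used_rep_of k)). Qed.

Lemma S_arc_track_interior_point g a b : S_arc g a b ->
  exists Y t, a < t < b /\ track_interior Y (g t).
Proof.
intros Hsub; pose proof Hsub as [Hs [Hab [Ha _]]].
destruct (track_from_node_right g a (S_curve_track_curve g Hs) ltac:(lra) (break_point_node _ Ha))
  as [Y [be [Hbe [KY _]]]].
pose proof (Rmin_l be b); pose proof (Rmin_r be b).
assert (a < Rmin be b) by (apply Rmin_glb_lt; lra).
by exists Y, ((a + Rmin be b) / 2); split; [lra|apply KY; lra].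
Qed.

Lemma S_arc_in_rep_arc g a b : S_arc g a b ->
  exists k, forall t, a <= t <= b -> arc_img (arc_of (rep_of k)) (g t).
Proof.
intros Hsub; destruct (S_arc_track_interior_point g a b Hsub) as [Y [t [Ht HY]]].
destruct (S_arc_in_arc_of g a b Y t Hsub Ht HY) as [RY KY].
destruct (arc_rep_exists Y RY) as [R [HR KR]]; destruct (rep_of_onto R HR) as [k <-].
by exists k; intros t' Ht'; apply KR, KY.
Qed.

Lemma S_arc_start_track g a b Z t : S_arc g a b -> a < t < b -> track_interior Z (g t) ->
  is_endpoint (tr Z) (g a) -> exists be, a < be /\ forall x, a < x < be -> track_interior Z (g x).
Proof.
intros Hsub Ht HZ EZ; pose proof Hsub as [Hs [Hab _]].
pose proof (S_curve_track_curve g Hs) as [_ [Hi _]].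
destruct (S_arc_traversal g a b Z t Hsub Ht HZ) as [al [be [Hal [Hbe [K [Ends _]]]]]].
have [Q|Q] : g al = g a \/ g be = g a.
{ by destruct EZ as [E|E]; destruct Ends as [[F1 F2]|[F1 F2]]; [left|right|right|left];
    congruence. }
- apply Hi in Q; [|lra|lra]; subst al; by exists be; split; [lra|].
- apply Hi in Q; lra.
Qed.

Lemma S_arc_start_tracks_eq g a b Z1 Z2 t1 t2 : S_arc g a b -> a < t1 < b -> a < t2 < b ->
  track_interior Z1 (g t1) -> track_interior Z2 (g t2) ->
  is_endpoint (tr Z1) (g a) -> is_endpoint (tr Z2) (g a) -> Z1 = Z2.
Proof.
intros Hsub Ht1 Ht2 HZ1 HZ2 E1 E2.
destruct (S_arc_start_track g a b Z1 t1 Hsub Ht1 HZ1 E1) as [b1 [Hb1 K1]].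
destruct (S_arc_start_track g a b Z2 t2 Hsub Ht2 HZ2 E2) as [b2 [Hb2 K2]].
pose proof (Rmin_l b1 b2); pose proof (Rmin_r b1 b2).
assert (a < Rmin b1 b2) by (apply Rmin_glb_lt; lra).
set (x := (a + Rmin b1 b2) / 2).
have I1 : track_interior Z1 (g x) by apply K1; unfold x; lra.
have I2 : track_interior Z2 (g x) by apply K2; unfold x; lra.
exact (track_interior_unique Z2 Z1 _ I2 (track_interior_img Z1 _ I1)).
Qed.

(* both tracks leave the break point along the arc, so they share inner points *)
Lemma same_arc_endpoint_eq Z1 Z2 p : used_track Z1 -> used_track Z2 -> same_arc Z1 Z2 ->
  is_endpoint (tr Z1) p -> is_endpoint (tr Z2) p -> break_point p -> Z1 = Z2.
Proof.
intros R1 R2 HK E1 E2 HB; pose proof (arc_ofP Z1 R1) as HA.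
pose proof HA as [_ [_ [Hsub [t1 [Ht1 HX1]]]]].
destruct (HK (tr Z2 (1 / 2))) as [_ Kx].
destruct (Kx (arc_through_img_track Z2 _ (arc_ofP Z2 R2) (1 / 2) ltac:(lra))) as [t2 [Ht2 Et2]].
have HX2 : track_interior Z2 (arc_curve (arc_of Z1) t2) by exists (1 / 2); split; [lra|].
pose proof (S_arc_inside _ _ _ t2 Z2 Hsub Ht2 HX2) as Ht2'.
have Kp : arc_img (arc_of Z1) p.
{ by destruct E1 as [E|E]; rewrite -E; apply (arc_through_img_track Z1 _ HA); lra. }
destruct (arc_through_img_break_point Z1 _ p HA Kp HB) as [->| ->].
- exact (S_arc_start_tracks_eq _ _ _ Z1 Z2 t1 t2 Hsub Ht1 Ht2' HX1 HX2 E1 E2).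
- have E1' : forall x, 1 - (1 - x) = x by intro; ring.
  apply (S_arc_start_tracks_eq _ _ _ Z1 Z2 (1 - t1) (1 - t2) (S_arc_rev _ _ _ Hsub));
    rewrite /rev_curve ?E1'; auto; lra.
Qed.

(** * The drawing of the induced subgraph *)

Definition arc_param (A : arc) (s : R) : point :=
  arc_curve A (arc_lo A + (arc_hi A - arc_lo A) * s).

Definition arc_param_deriv (A : arc) (s : R) : point :=
  scale (arc_hi A - arc_lo A) (arc_deriv A (arc_lo A + (arc_hi A - arc_lo A) * s)).

Lemma arc_param0 A : arc_param A 0 = arc_curve A (arc_lo A).
Proof. by unfold arc_param; f_equal; ring. Qed.

Lemma arc_param1 A : arc_param A 1 = arc_curve A (arc_hi A).
Proof. by unfold arc_param; f_equal; ring. Qed.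

Lemma img_arc_param A p : arc_lo A < arc_hi A -> img (arc_param A) p <-> arc_img A p.
Proof.
unfold arc_param, arc_img; set (a := arc_lo A); set (b := arc_hi A); intro Hab; split.
- intros [s [Hs E]]; exists (a + (b - a) * s); split; auto.
  exact (affine_between a b s ltac:(lra) Hs).
- intros [t [Ht E]]; exists ((t - a) / (b - a)); split.
  + split; [unfold Rdiv; apply Rmult_le_pos; [lra|apply Rlt_le, Rinv_0_lt_compat; lra]|].
    apply (Rmult_le_reg_r (b - a)); [lra|]; unfold Rdiv; rewrite Rmult_assoc Rinv_l; lra.
  + by rewrite (_ : a + (b - a) * ((t - a) / (b - a)) = t); [|field; lra].
Qed.

Definition new_tr (k : 'I_#|rep_tracks|) : R -> point := arc_param (arc_of (rep_of k)).

Definition new_dtr (k : 'I_#|rep_tracks|) : R -> point := arc_param_deriv (arc_of (rep_of k)).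

Lemma img_new_tr k p : img (new_tr k) p <-> arc_img (arc_of (rep_of k)) p.
Proof. apply img_arc_param, (arc_through_bounds _ _ (arc_of_rep_ofP k)). Qed.

Definition th_S (x : {x : V | x \in S}) : R := th (val x).

Lemma vertex_point_S p : is_vertex_point th0 th_S p <-> exists u, u \in S /\ p = vpos th0 th u.
Proof.
split; [intros [w <-]; by exists (val w); split; [exact (valP w)|]|].
by intros [u [Hu ->]]; exists (exist _ u Hu).
Qed.

Lemma arc_img_curve X A p : arc_through X A -> arc_img A p ->
  exists t, 0 <= t <= 1 /\ arc_curve A t = p.
Proof.
intros HA [t [Ht E]]; pose proof (arc_through_bounds X A HA).
by exists t; split; [lra|].
Qed.

Lemma arc_img_in_tracks X A p : arc_through X A -> arc_img A p -> in_tracks tr p.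
Proof.
intros HA Hp; destruct (arc_img_curve X A p HA Hp) as [t [Ht <-]].
pose proof HA as [Hsec _]; pose proof (S_curve_track_curve _ (or_introl Hsec)) as [_ [_ [Hin _]]].
exact (Hin t Ht).
Qed.

Lemma arc_img_vertex X A p : arc_through X A -> arc_img A p -> is_vertex_point th0 th p ->
  exists u, u \in S /\ p = vpos th0 th u.
Proof.
intros HA Hp Hv; destruct (arc_img_curve X A p HA Hp) as [t [Ht <-]].
pose proof HA as [Hsec _].
destruct (S_curve_ends _ (or_introl Hsec)) as [[u0 [Hu0 E0]] [u1 [Hu1 E1]]].
destruct (Req_dec t 0) as [->|N0]; [by exists u0|].
destruct (Req_dec t 1) as [->|N1]; [by exists u1|].
by elim (S_curve_not_vertex _ t (or_introl Hsec) ltac:(lra)).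
Qed.

Lemma new_edge_curve_old (u v : {x : V | x \in S}) g :
  edge_curve th0 th_S new_tr u v g -> edge_curve th0 th tr (val u) (val v) g.
Proof.
intros [Hs [Hi0 [Hi1 [E0 [E1 [Hin Hnv]]]]]]; do 5 (split; auto); split.
- intros p Hp; destruct (Hin p Hp) as [k Hk]; apply img_new_tr in Hk.
  exact (arc_img_in_tracks _ _ p (arc_of_rep_ofP k) Hk).
- intros t Ht Hv; destruct (Hin (g t)) as [k Hk]; [by exists t; split; [lra|]|].
  apply img_new_tr in Hk.
  apply (Hnv t Ht), vertex_point_S, (arc_img_vertex _ _ _ (arc_of_rep_ofP k) Hk Hv).
Qed.

Lemma old_edge_curve_new (u v : {x : V | x \in S}) g :
  edge_curve th0 th tr (val u) (val v) g -> edge_curve th0 th_S new_tr u v g.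
Proof.
intro Hec; pose proof Hec as [Hs [Hi0 [Hi1 [E0 [E1 [Hin Hnv]]]]]].
have Hsec : S_edge_curve g by exists (val u), (val v); do 2 (split; [exact (valP _)|]).
do 5 (split; auto); split.
- intros p [tau [Htau <-]].
  destruct (S_arc_around g tau (or_introl Hsec) Htau) as [a [b [Hsub Hab]]].
  destruct (S_arc_in_rep_arc g a b Hsub) as [k Hk].
  by exists k; apply img_new_tr, Hk.
- intros t Ht Hv; apply vertex_point_S in Hv; destruct Hv as [w [_ Ew]].
  by apply (Hnv t Ht); exists w.
Qed.

Lemma new_track_tangent k e0 : e0 = 0 \/ e0 = 1 ->
  exists Z e, (e = 0 \/ e = 1) /\ tr Z e = new_tr k e0 /\ parallel (new_dtr k e0) (dtr Z e).
Proof.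
intro He0; pose proof (arc_of_rep_ofP k) as [Hsec [[HC1 _] [Hsub _]]].
set (A := arc_of (rep_of k)) in *; pose proof Hsub as [_ [Hab [Ha [Hb _]]]].
set (tau := arc_lo A + (arc_hi A - arc_lo A) * e0).
have Htau : tau = arc_lo A \/ tau = arc_hi A.
{ by destruct He0; subst; [left|right]; unfold tau; ring. }
have Hn : node (arc_curve A tau) by apply break_point_node; destruct Htau as [-> | ->].
destruct (node_tangent_parallel _ (arc_deriv A) tau (S_curve_track_curve _ (or_introl Hsec)) HC1
  ltac:(destruct Htau as [-> | ->]; lra) Hn) as [Z [e [He [Ee Pe]]]].
exists Z, e; do 2 (split; auto); exact (parallel_scale_l _ _ _ Pe).
Qed.

Lemma break_point_new_endpoint Z p : break_point p -> used_track Z -> is_endpoint (tr Z) p ->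
  exists k, same_arc (rep_of k) Z /\ is_endpoint (new_tr k) p.
Proof.
intros HB RZ EZ; destruct (arc_rep_exists Z RZ) as [R [HR KR]].
destruct (rep_of_onto R HR) as [k Ek]; exists k; rewrite Ek; split; auto.
have Kp : arc_img (arc_of R) p.
{ by apply KR; destruct EZ as [E|E]; rewrite -E; apply (arc_through_img_track Z _ (arc_ofP Z RZ));
    lra. }
rewrite -Ek in Kp |- *; rewrite /is_endpoint /new_tr arc_param0 arc_param1.
by destruct (arc_through_img_break_point _ _ p (arc_of_rep_ofP k) Kp HB) as [E|E]; [left|right].
Qed.

Lemma used_junction_new_junction p : used_junction p -> is_junction new_tr new_dtr p.
Proof.
intro HJ; have HB : break_point p by right.
destruct HJ as [Hsq [X1 [X2 [X3 [N12 [N13 [N23 [R1 [R2 [R3 [E1 [E2 E3]]]]]]]]]]]].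
split; [exact Hsq|split].
- have Hne : forall Xi Xj ki kj, used_track Xi -> used_track Xj -> Xi <> Xj ->
      is_endpoint (tr Xi) p -> is_endpoint (tr Xj) p ->
      same_arc (rep_of ki) Xi -> same_arc (rep_of kj) Xj -> ki <> kj.
  { intros Xi Xj ki kj Ri Rj Nij Ei Ej Ki Kj ->; apply Nij.
    apply (same_arc_endpoint_eq Xi Xj p Ri Rj); auto.
    exact (same_arc_trans _ _ _ (same_arc_sym _ _ Ki) Kj). }
  destruct (break_point_new_endpoint X1 p HB R1 E1) as [k1 [K1 F1]].
  destruct (break_point_new_endpoint X2 p HB R2 E2) as [k2 [K2 F2]].
  destruct (break_point_new_endpoint X3 p HB R3 E3) as [k3 [K3 F3]].
  exists k1, k2, k3; split; [exact (Hne X1 X2 k1 k2 R1 R2 N12 E1 E2 K1 K2)|].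
  split; [exact (Hne X1 X3 k1 k3 R1 R3 N13 E1 E3 K1 K3)|].
  split; [exact (Hne X2 X3 k2 k3 R2 R3 N23 E2 E3 K2 K3)|auto].
- intros i j a' b' Ha Hb Ei Ej.
  destruct (new_track_tangent i a' Ha) as [Z [e [He [Ee Pe]]]].
  destruct (new_track_tangent j b' Hb) as [Z' [e' [He' [Ee' Pe']]]].
  rewrite Ei in Ee; rewrite Ej in Ee'.
  have EZ : is_endpoint (tr Z) p by destruct He; subst e; [left|right].
  pose proof (interior_endpoint_junction Z p EZ Hsq) as [_ [_ J]].
  apply (parallel_trans _ (dtr Z' e')); [exact (track_deriv_end_neq0 Z' e' He')| |].
  + apply (parallel_trans _ (dtr Z e)); [exact (track_deriv_end_neq0 Z e He)|exact Pe|].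
    exact (J Z Z' e e' He He' Ee Ee').
  + exact (parallel_sym _ _ Pe').
Qed.

Lemma new_tracks_smooth k : smooth_with (new_tr k) (new_dtr k).
Proof.
pose proof (arc_of_rep_ofP k) as HA; pose proof (arc_through_bounds _ _ HA).
apply (smooth_with_affine _ _ _ _ (proj1 (proj2 HA))); lra.
Qed.

Lemma new_tracks_inj k : injective_on (fun t => 0 <= t <= 1) (new_tr k).
Proof.
intros s t Hs Ht E; pose proof (arc_of_rep_ofP k) as HA; pose proof (arc_through_bounds _ _ HA).
pose proof HA as [Hsec _]; pose proof (S_curve_track_curve _ (or_introl Hsec)) as [_ [Hi _]].
unfold new_tr, arc_param in E; set (A := arc_of (rep_of k)) in *.
pose proof (affine_between (arc_lo A) (arc_hi A) s ltac:(lra) ltac:(lra)).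
pose proof (affine_between (arc_lo A) (arc_hi A) t ltac:(lra) ltac:(lra)).
apply Hi in E; [|lra|lra].
apply (Rmult_eq_reg_l (arc_hi A - arc_lo A)); lra.
Qed.

Lemma new_track_endpoint_of_meet k l p : ~ same_arc (rep_of k) (rep_of l) ->
  img (new_tr k) p -> img (new_tr l) p -> is_endpoint (new_tr k) p.
Proof.
intros NK Hk Hl; apply img_new_tr in Hk; apply img_new_tr in Hl.
destruct Hk as [t [Ht <-]]; rewrite /is_endpoint /new_tr arc_param0 arc_param1.
destruct (Req_dec t (arc_lo (arc_of (rep_of k)))) as [->|N1]; [by left|].
destruct (Req_dec t (arc_hi (arc_of (rep_of k)))) as [->|N2]; [by right|].
elim NK; exact (arc_through_inner_meet _ _ _ _ t (arc_of_rep_ofP k) (arc_of_rep_ofP l)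
  ltac:(lra) Hl).
Qed.

Lemma new_tracks_meet_at_ends i j : i <> j -> forall p, img (new_tr i) p -> img (new_tr j) p ->
  is_endpoint (new_tr i) p /\ is_endpoint (new_tr j) p.
Proof.
intros Nij p Hi Hj.
have NK : ~ same_arc (rep_of i) (rep_of j).
{ apply arc_rep_distinct; [exact (rep_ofP i)|exact (rep_ofP j)|].
  intro E; exact (Nij (enum_val_inj E)). }
split; [exact (new_track_endpoint_of_meet i j p NK Hi Hj)|].
exact (new_track_endpoint_of_meet j i p (fun K => NK (same_arc_sym _ _ K)) Hj Hi).
Qed.

Lemma new_track_inner_in_disk k t : 0 < t < 1 -> sqnorm (new_tr k t) < 1.
Proof.
intro Ht; pose proof (arc_of_rep_ofP k) as HA; pose proof (arc_through_bounds _ _ HA).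
pose proof HA as [Hsec _]; unfold new_tr, arc_param; set (A := arc_of (rep_of k)) in *.
pose proof (affine_between_strict (arc_lo A) (arc_hi A) t ltac:(lra) Ht).
set (x := arc_lo A + (arc_hi A - arc_lo A) * t) in *.
destruct (node_or_track_interior _ x (S_curve_track_curve _ (or_introl Hsec)) ltac:(lra))
  as [C|[Z HZ]].
- exact (S_curve_inner_node _ x (or_introl Hsec) ltac:(lra) C).
- exact (sqnorm_track_interior Z _ HZ).
Qed.

Lemma new_track_endpoints k p : is_endpoint (new_tr k) p ->
  is_vertex_point th0 th_S p \/ is_junction new_tr new_dtr p.
Proof.
intro Ep; pose proof (arc_of_rep_ofP k) as [_ [_ [[_ [_ [Ha [Hb _]]]] _]]].
have [[u [Hu Eu]]|HJ] : break_point p.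
{ by destruct Ep as [E|E]; rewrite -E /new_tr ?arc_param0 ?arc_param1. }
- by left; apply vertex_point_S; exists u.
- by right; apply used_junction_new_junction.
Qed.

Lemma new_tracks_ok : tracks_ok th0 th_S new_tr new_dtr.
Proof.
split; [exact new_tracks_smooth|]; split; [exact new_tracks_inj|].
split; [exact new_tracks_meet_at_ends|].
split; [exact new_track_inner_in_disk|exact new_track_endpoints].
Qed.

Lemma new_draws : draws th0 th_S new_tr new_dtr (induced_adj S adj).
Proof.
destruct Hdr as [_ [Hnl [Hadj [Hna Hcov]]]].
have Hval : forall u v : {x : V | x \in S}, u <> v -> val u <> val v.
{ by intros u v Nuv E; apply Nuv, val_inj. }
split; [exact new_tracks_ok|]; split; [|split; [|split]].
- intros v g H; exact (Hnl (val v) g (new_edge_curve_old v v g H)).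
- intros u v Nuv Huv; destruct (Hadj (val u) (val v) (Hval u v Nuv) Huv) as [[g Hg] Hu].
  split; [by exists g; apply old_edge_curve_new|].
  intros g1 g2 H1 H2; apply Hu.
  + by destruct H1 as [H1|H1]; [left|right]; apply new_edge_curve_old.
  + by destruct H2 as [H2|H2]; [left|right]; apply new_edge_curve_old.
- intros u v Nuv Huv g Hg.
  exact (Hna (val u) (val v) (Hval u v Nuv) Huv g (new_edge_curve_old _ _ _ Hg)).
- intro k; pose proof (arc_of_rep_ofP k) as HA; pose proof (arc_through_bounds _ _ HA).
  destruct HA as [[u [v [Hu [Hv Hec]]]] _].
  exists (exist _ u Hu), (exist _ v Hv), (arc_curve (arc_of (rep_of k))).
  split; [exact (old_edge_curve_new (exist _ u Hu) (exist _ v Hv) _ Hec)|].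
  intros p Hp; apply img_new_tr in Hp; destruct Hp as [t [Ht Et]].
  by exists t; split; [lra|].
Qed.

End Drawing.

Theorem corollary26 (V : finType) (adj lt : rel V) (S : {set V}) :
  strict_outerconfluent_ordered adj lt ->
  strict_outerconfluent_ordered (induced_adj S adj) (induced_lt S lt).
Proof.
intros [Hsym [Hirr [m [th0 [th [tr [dtr [Hrange [Hinj [Hlt Hdr]]]]]]]]]].
split; [by intros x y; apply Hsym|]; split; [by intro x; apply Hirr|].
exists #|rep_tracks V m th0 th tr S|, th0, (th_S V th S),
  (new_tr V m th0 th tr S), (new_dtr V m th0 th tr S).
split; [by intro v; apply Hrange|]; split; [by intros x y E; apply val_inj, Hinj|].
split; [by intros x y; apply Hlt|].
exact (new_draws V m th0 th tr dtr (proj1 Hdr) adj S Hdr).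
Qed.
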